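(* Let $X=\ell_p$ for some $1\le p<\infty$, or $X=c_0$, considered as a Banach algebra under coordinatewise multiplication. Let $\mathcal A$ be a finitely invariant Furstenberg family and $\lambda\in\mathbb C$ with $|\lambda|>1$. Then $\lambda B$ admits an algebra of $\mathcal A$-hypercyclic vectors, except zero (i.e. there is a subalgebra $\mathcal B\ne\{0\}$ of $X$ all of whose non-zero elements are $\mathcal A$-hypercyclic for $\lambda B$), if and only if there exists a family $(A(l,m))_{l,m\ge1}$ of pairwise disjoint sets in $\mathcal A$ such that, for any $l,m,l',m'\ge1$ and any $n\in A(l,m)$, $n'\in A(l',m')$ with $n'>n$, we have $n'\ge n+l$ and $n'\frac{m}{m'}\ge n+l+l'$.
   Context: $\lambda B(x(1),x(2),x(3),\ldots)=(\lambda x(2),\lambda x(3),\ldots)$. A Furstenberg family is a non-empty family $\mathcal A$ of subsets of $\mathbb N_0$ with $\varnothing\notin\mathcal A$ and such that $A\in\mathcal A$, $A\subset B\subset\mathbb N_0$ imply $B\in\mathcal A$; it is finitely invariant if $A\in\mathcal A$ implies $A\setminus[0,N]\in\mathcal A$ for all $N\ge0$. A vector $x$ is $\mathcal A$-hypercyclic for an operator $T$ if for every non-empty open $U\subset X$, $\{n\ge0:T^nx\in U\}\in\mathcal A$. *)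

From Stdlib Require Import Reals.
From Coquelicot Require Import Coquelicot.
Open Scope R_scope.

Definition cseq := nat -> C.

Definition powp (a p : R) : R := if Req_EM_T a 0 then 0 else Rpower a p.

Inductive seqspace := Lp (p : R) | C0space.

Definition valid_space (X : seqspace) : Prop :=
  match X with Lp p => 1 <= p | C0space => True end.

Definition inX (X : seqspace) (x : cseq) : Prop :=
  match X with
  | Lp p => ex_series (fun n => powp (Cmod (x n)) p)
  | C0space => is_lim_seq (fun n => Cmod (x n)) 0
  end.

Definition normX (X : seqspace) (x : cseq) : R :=
  match X with
  | Lp p => powp (Series (fun n => powp (Cmod (x n)) p)) (1 / p)
  | C0space => real (Sup_seq (fun n => Cmod (x n)))
  end.

Definition csub (x y : cseq) : cseq := fun n => Cminus (x n) (y n).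

Definition openX (X : seqspace) (U : cseq -> Prop) : Prop :=
  (forall x, U x -> inX X x) /\
  forall x, U x -> exists eps, 0 < eps /\
    forall y, inX X y -> normX X (csub y x) < eps -> U y.

Definition czero : cseq := fun _ => RtoC 0.
Definition cadd (x y : cseq) : cseq := fun n => Cplus (x n) (y n).
Definition cscal (a : C) (x : cseq) : cseq := fun n => Cmult a (x n).
Definition cmul (x y : cseq) : cseq := fun n => Cmult (x n) (y n).

Definition subalgebra (X : seqspace) (B : cseq -> Prop) : Prop :=
  (forall x, B x -> inX X x) /\
  B czero /\
  (forall x y, B x -> B y -> B (cadd x y)) /\
  (forall a x, B x -> B (cscal a x)) /\
  (forall x y, B x -> B y -> B (cmul x y)).

Definition lamB (lam : C) (x : cseq) : cseq := fun n => Cmult lam (x (S n)).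

Definition furstenberg (A : (nat -> Prop) -> Prop) : Prop :=
  (exists S, A S) /\
  ~ A (fun _ => False) /\
  (forall S S', A S -> (forall n, S n -> S' n) -> A S').

Definition finitely_invariant (A : (nat -> Prop) -> Prop) : Prop :=
  forall S, A S -> forall N : nat, A (fun n => S n /\ (N < n)%nat).

Definition A_hypercyclic (X : seqspace) (A : (nat -> Prop) -> Prop)
  (T : cseq -> cseq) (x : cseq) : Prop :=
  forall U, openX X U -> (exists y, U y) ->
    A (fun n => U (Nat.iter n T x)).

(* Necessity.  If [x <> 0] lies in a hypercyclic algebra, so does every power
   [x^m], and we let [F l m] be the set of return times of [(lam B)^n x^m] to a
   small neighbourhood of the sequence with three equal peaks, at [0], [l] and
   [l + m], of height [|lam|^(l m) + 1].  At a return time [n] the moduli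
   [|lam|^n |x_q|^m] are large on [n], [n + l], [n + l + m] and tiny elsewhere;
   comparing two returns coordinatewise shows that distinct pairs [(l, m)] never
   return at the same time, that a later return [n'] satisfies [n' > n + l + m],
   and that [|lam|^(l' m') <= |lam|^n' |x_n'|^m'] together with
   [|lam|^n |x_n'|^m <= |lam|^(-l)] gives [n' m > (n + l) m' + l' m' m].

   Sufficiency.  Let [dense_seq l] enumerate, with repetitions, a dense set of
   finitely supported sequences.  Using the given family at suitably large
   indices [gap l m], we build [x] blockwise: for every return time [n] of
   [(l, m)] the block starting at [n] carries the [m]-th roots of
   [dense_seq l / lam^n], so that [lam^n x^m] reproduces [dense_seq l] there.
   The spacing condition keeps the blocks disjoint and makes the contribution of
   all later blocks to [lam^n x^m] summable and small.  If [P] is a polynomial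
   without constant term whose lowest monomial is [a z^m], then on such a block
   [P(x) ~ a x^m] since [x] is small, so [(lam B)^n P(x)] is close to
   [a * dense_seq l]; density of [dense_seq] makes every nonzero element of the
   algebra generated by [x] [A]-hypercyclic. *)

From Stdlib Require Import Reals Lra Lia Psatz List Wf_nat ZArith Cantor.
From Stdlib Require Import Classical ClassicalEpsilon FunctionalExtensionality.
From Coquelicot Require Import Coquelicot.
Open Scope R_scope.

(** * Real powers, finite sums and series *)

Lemma powp_ge0 a p : 0 <= powp a p.
Proof. unfold powp; destruct (Req_EM_T a 0); [lra | left; apply exp_pos]. Qed.

Lemma powp0 p : powp 0 p = 0.
Proof. unfold powp; destruct (Req_EM_T 0 0); lra. Qed.

Lemma powp_Rpower a p : 0 < a -> powp a p = Rpower a p.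
Proof. intros Ha; unfold powp; destruct (Req_EM_T a 0); [lra | reflexivity]. Qed.

Lemma powp_gt0 a p : 0 < a -> 0 < powp a p.
Proof. intros Ha; rewrite powp_Rpower by lra; apply exp_pos. Qed.

Lemma powp_le a b p : 0 <= a <= b -> 0 <= p -> powp a p <= powp b p.
Proof.
  intros [Ha Hab] Hp; destruct (Req_dec a 0) as [->|Ha0].
  - rewrite powp0; apply powp_ge0.
  - rewrite !powp_Rpower by lra; apply Rle_Rpower_l; lra.
Qed.

Lemma powp_lt a b p : 0 <= a < b -> 0 < p -> powp a p < powp b p.
Proof.
  intros [Ha Hab] Hp; destruct (Req_dec a 0) as [->|Ha0].
  - rewrite powp0; apply powp_gt0; lra.
  - rewrite !powp_Rpower by lra; apply Rlt_Rpower_l; lra.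
Qed.

Lemma powp_mult a b p : 0 <= a -> 0 <= b -> powp (a * b) p = powp a p * powp b p.
Proof.
  intros Ha Hb; destruct (Req_dec a 0) as [->|Ha0].
  { rewrite Rmult_0_l, !powp0; ring. }
  destruct (Req_dec b 0) as [->|Hb0].
  { rewrite Rmult_0_r, !powp0; ring. }
  rewrite !powp_Rpower by nra; symmetry; apply Rpower_mult_distr; lra.
Qed.

Lemma powpK a p : 0 <= a -> 0 < p -> powp (powp a p) (1 / p) = a.
Proof.
  intros Ha Hp; destruct (Req_dec a 0) as [->|Ha0]; [rewrite !powp0; reflexivity|].
  rewrite (powp_Rpower a), powp_Rpower, Rpower_mult by (try apply exp_pos; lra).
  replace (p * (1 / p)) with 1 by (field; lra); apply Rpower_1; lra.
Qed.

Lemma powp_le_id a p : 0 <= a <= 1 -> 1 <= p -> powp a p <= a.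
Proof.
  intros [Ha Ha1] Hp; destruct (Req_dec a 0) as [->|Ha0]; [rewrite powp0; lra|].
  rewrite powp_Rpower by lra; rewrite <- (Rpower_1 a) at 2 by lra; unfold Rpower.
  assert (ln a <= 0) by (rewrite <- ln_1; apply ln_le; lra).
  assert (Hle : p * ln a <= 1 * ln a) by nra.
  destruct (Rle_lt_or_eq_dec _ _ Hle) as [Hlt | E]; [left; apply exp_increasing, Hlt | rewrite E; lra].
Qed.

Lemma powp_plus_le a b p : 0 <= a -> 0 <= b -> 0 <= p ->
  powp (a + b) p <= powp 2 p * (powp a p + powp b p).
Proof.
  intros Ha Hb Hp.
  assert (Hmax : 0 <= Rmax a b) by (apply (Rle_trans _ a); [lra | apply Rmax_l]).
  apply (Rle_trans _ (powp (2 * Rmax a b) p)).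
  { apply powp_le; [|lra]; split; [lra|].
    pose proof (Rmax_l a b); pose proof (Rmax_r a b); lra. }
  rewrite powp_mult by lra; apply Rmult_le_compat_l; [apply powp_ge0|].
  pose proof (powp_ge0 a p); pose proof (powp_ge0 b p).
  unfold Rmax; destruct (Rle_dec a b); lra.
Qed.

Lemma pow_lt_compat a b m : (0 < m)%nat -> 0 <= a < b -> a ^ m < b ^ m.
Proof.
  intros Hm [Ha Hab]; induction m as [|[|m] IH]; [lia | simpl; lra |].
  specialize (IH ltac:(lia)); change (a * a ^ S m < b * b ^ S m).
  assert (0 <= a ^ S m) by (apply pow_le; lra); nra.
Qed.

Lemma pow_lt_reg a b m : 0 <= b -> a ^ m < b ^ m -> a < b.
Proof.
  intros Hb H; destruct (Rlt_le_dec a b) as [|Hba]; [assumption|].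
  pose proof (pow_incr b a m (conj Hb Hba)); lra.
Qed.

Lemma pow_le_reg a b m : (0 < m)%nat -> 0 <= b -> a ^ m <= b ^ m -> a <= b.
Proof.
  intros Hm Hb H; destruct (Rle_lt_dec a b) as [|Hba]; [assumption|].
  pose proof (pow_lt_compat b a m Hm (conj Hb Hba)); lra.
Qed.

Lemma pow_le_decr a i j : 0 <= a <= 1 -> (i <= j)%nat -> a ^ j <= a ^ i.
Proof.
  intros Ha Hij; replace j with (i + (j - i))%nat by lia; rewrite pow_add.
  assert (0 <= a ^ i) by (apply pow_le; lra).
  assert (a ^ (j - i) <= 1) by (rewrite <- (pow1 (j - i)); apply pow_incr; lra).
  nra.
Qed.

Lemma pow_lt_reg_exp r a b : 1 < r -> r ^ a < r ^ b -> (a < b)%nat.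
Proof.
  intros Hr H; destruct (Nat.lt_ge_cases a b) as [|Hba]; [assumption|].
  pose proof (Rle_pow r b a ltac:(lra) Hba); lra.
Qed.

Lemma INR_unbounded x : exists N, x < INR N.
Proof.
  destruct (archimed x) as [Hup _]; destruct (Z.le_gt_cases 0 (up x)).
  - exists (Z.to_nat (up x)); rewrite INR_IZR_INZ, Z2Nat.id by lia; exact Hup.
  - exists 0%nat; assert (IZR (up x) <= -1) by (apply IZR_le; lia); simpl; lra.
Qed.

Lemma pow_unbounded r B M : 1 < r -> exists s, (M <= s)%nat /\ B <= r ^ s.
Proof.
  intros Hr; destruct (INR_unbounded (B / (r - 1))) as [N HN].
  exists (M + N)%nat; split; [lia|].
  replace (r ^ (M + N)) with ((1 + (r - 1)) ^ (M + N)) by (f_equal; ring).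
  eapply Rle_trans; [|apply Rle_pow_lin; lra].
  assert (B < INR N * (r - 1)).
  { apply (Rmult_lt_compat_r (r - 1)) in HN; [|lra].
    unfold Rdiv in HN; rewrite Rmult_assoc, Rinv_l, Rmult_1_r in HN by lra; exact HN. }
  rewrite plus_INR; pose proof (pos_INR M); nra.
Qed.

Lemma INR_le_pow2 n : INR n <= 2 ^ n.
Proof.
  induction n as [|n IH]; [simpl; lra|].
  rewrite S_INR; simpl; pose proof (pow_R1_Rle 2 n ltac:(lra)); lra.
Qed.

Lemma bernoulli_decr x n : 0 <= x <= 1 -> 1 - INR n * x <= (1 - x) ^ n.
Proof.
  intros Hx; induction n as [|n IH]; [simpl; lra|].
  rewrite S_INR; simpl; pose proof (pos_INR n).
  assert (0 <= (1 - x) ^ n) by (apply pow_le; lra).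
  destruct (Rle_dec 0 (1 - INR n * x)).
  - assert ((1 - x) * (1 - INR n * x) <= (1 - x) * (1 - x) ^ n)
      by (apply Rmult_le_compat_l; lra).
    assert (0 <= INR n * x * x) by (apply Rmult_le_pos; [apply Rmult_le_pos|]; lra).
    nra.
  - nra.
Qed.

Lemma Cmod_triangle_rev a b : Cmod a - Cmod b <= Cmod (Cminus a b).
Proof.
  pose proof (Cmod_triangle (Cminus a b) b).
  replace (Cplus (Cminus a b) b) with a in H by ring; lra.
Qed.

Lemma Cmod_minusC a b : Cmod (Cminus a b) = Cmod (Cminus b a).
Proof. replace (Cminus a b) with (Copp (Cminus b a)) by ring; apply Cmod_opp. Qed.

Lemma Cmod_le_Rabs_re_im (w : C) : Cmod w <= Rabs (fst w) + Rabs (snd w).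
Proof.
  destruct w as [a b]; simpl fst; simpl snd.
  replace (a, b) with (Cplus (RtoC a) (Cmult (RtoC b) Ci))
    by (unfold Cplus, Cmult, RtoC, Ci; simpl; f_equal; ring).
  eapply Rle_trans; [apply Cmod_triangle|].
  rewrite Cmod_mult, Cmod_Ci, !Cmod_R; lra.
Qed.

Fixpoint rsum (f : nat -> R) (D : nat) : R :=
  match D with O => 0 | S D => rsum f D + f D end.

Lemma rsum_ext f g D : (forall j, (j < D)%nat -> f j = g j) -> rsum f D = rsum g D.
Proof. induction D as [|D IH]; intros H; simpl; [reflexivity|]; rewrite IH, H; auto. Qed.

Lemma rsum_le f g D : (forall j, (j < D)%nat -> f j <= g j) -> rsum f D <= rsum g D.
Proof.
  induction D as [|D IH]; intros H; simpl; [lra|].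
  pose proof (IH (fun j Hj => H j ltac:(lia))); pose proof (H D ltac:(lia)); lra.
Qed.

Lemma rsum_ge0 f D : (forall j, 0 <= f j) -> 0 <= rsum f D.
Proof. intros H; induction D as [|D IH]; simpl; [lra|]; pose proof (H D); lra. Qed.

Lemma rsum_plus f g D : rsum (fun j => f j + g j) D = rsum f D + rsum g D.
Proof. induction D as [|D IH]; simpl; [ring|]; rewrite IH; ring. Qed.

Lemma rsum_scal_l f a D : rsum (fun j => a * f j) D = a * rsum f D.
Proof. induction D as [|D IH]; simpl; [ring|]; rewrite IH; ring. Qed.

Lemma rsum_const c D : rsum (fun _ => c) D = INR D * c.
Proof. induction D as [|D IH]; simpl; [ring|]; rewrite IH; destruct D; simpl; ring. Qed.

Lemma rsum_ge_term f k D : (forall j, 0 <= f j) -> (k < D)%nat -> f k <= rsum f D.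
Proof.
  intros Hf Hk; induction D as [|D IH]; [lia|]; simpl.
  destruct (Nat.eq_dec k D) as [->|].
  - pose proof (rsum_ge0 f D Hf); lra.
  - pose proof (IH ltac:(lia)); pose proof (Hf D); lra.
Qed.

Lemma rsum_le_len f D D' : (forall j, 0 <= f j) -> (D <= D')%nat -> rsum f D <= rsum f D'.
Proof. intros H Hle; induction Hle as [|D' _ IH]; simpl; [lra|]; pose proof (H D'); lra. Qed.

Lemma rsum_split f a b : rsum f (a + b) = rsum f a + rsum (fun k => f (a + k)%nat) b.
Proof.
  induction b as [|b IH]; simpl; [rewrite Nat.add_0_r; ring|].
  rewrite Nat.add_succ_r; simpl; rewrite IH; ring.
Qed.

Lemma rsum_swap (f : nat -> nat -> R) A B :
  rsum (fun i => rsum (fun j => f i j) B) A = rsum (fun j => rsum (fun i => f i j) A) B.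
Proof.
  induction A as [|A IH]; simpl.
  - rewrite rsum_const; ring.
  - rewrite IH, <- rsum_plus; reflexivity.
Qed.

Lemma rsum_indicator c Sz Q :
  rsum (fun k => if Nat.ltb k Sz then c else 0) Q = INR (Nat.min Q Sz) * c.
Proof.
  induction Q as [|Q IH]; simpl rsum; [simpl; ring|]; rewrite IH.
  destruct (Nat.ltb_spec Q Sz).
  - replace (Nat.min (S Q) Sz) with (S (Nat.min Q Sz)) by lia; rewrite S_INR; ring.
  - replace (Nat.min (S Q) Sz) with (Nat.min Q Sz) by lia; ring.
Qed.

Lemma sum_n_rsum (f : nat -> R) Q : sum_n f Q = rsum f (S Q).
Proof.
  induction Q as [|Q IH]; [rewrite sum_O; simpl; ring|].
  rewrite sum_Sn, IH; reflexivity.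
Qed.

Lemma rsum_geom p N : 0 <= p < 1 -> rsum (fun i => p ^ i) N <= / (1 - p).
Proof.
  intros Hp.
  assert (E : rsum (fun i => p ^ i) N * (1 - p) = 1 - p ^ N).
  { induction N as [|N IH]; simpl; [ring|]; rewrite Rmult_plus_distr_r, IH; ring. }
  pose proof (pow_le p N ltac:(lra)).
  apply (Rmult_le_reg_r (1 - p)); [lra|]; rewrite E, Rinv_l by lra; lra.
Qed.

Lemma rsum_geom_from p d Q :
  rsum (fun k => if Nat.leb d k then p ^ (k - d) else 0) Q = rsum (fun i => p ^ i) (Q - d).
Proof.
  induction Q as [|Q IH]; [reflexivity|]; cbn [rsum]; rewrite IH.
  destruct (Nat.leb_spec d Q).
  - rewrite Nat.sub_succ_l by assumption; reflexivity.
  - replace (S Q - d)%nat with (Q - d)%nat by lia; ring.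
Qed.

Lemma rsum_geom_shift p n z Q : 0 <= p < 1 ->
  rsum (fun k => if Nat.leb z (n + k) then p ^ (n + k - z) else 0) Q <= / (1 - p).
Proof.
  intros Hp; destruct (Nat.le_gt_cases z n).
  - eapply Rle_trans; [|apply (rsum_geom p Q Hp)]; apply rsum_le; intros k _.
    destruct (Nat.leb_spec z (n + k)); [|lia]; apply pow_le_decr; lia || lra.
  - rewrite (rsum_ext _ (fun k => if Nat.leb (z - n) k then p ^ (k - (z - n)) else 0)).
    + rewrite rsum_geom_from; apply rsum_geom, Hp.
    + intros k _; destruct (Nat.leb_spec (z - n) k), (Nat.leb_spec z (n + k)); try lia;
        [f_equal; lia | reflexivity].
Qed.

Lemma rsum2_half A B : rsum (fun i => rsum (fun j => (1/2) ^ i * (1/2) ^ j) B) A <= 4.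
Proof.
  assert (Hg : forall D, rsum (fun j => (1/2) ^ j) D <= 2).
  { intros D; eapply Rle_trans; [apply rsum_geom|]; lra. }
  apply (Rle_trans _ (rsum (fun i => 2 * (1/2) ^ i) A)).
  - apply rsum_le; intros i _; rewrite rsum_scal_l, (Rmult_comm 2).
    apply Rmult_le_compat_l; [apply pow_le; lra | apply Hg].
  - rewrite (rsum_scal_l (fun i => (1/2) ^ i)); pose proof (Hg A); lra.
Qed.

Section NonnegSeries.

Variable b : nat -> R.
Hypothesis b_ge0 : forall k, 0 <= b k.

Lemma ex_series_bounded B : (forall Q, rsum b Q <= B) -> ex_series b /\ Series b <= B.
Proof.
  intros HB.
  assert (Hincr : forall n, sum_n b n <= sum_n b (S n))
    by (intros n; rewrite sum_Sn; pose proof (b_ge0 (S n)); simpl; unfold plus; simpl; lra).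
  assert (Hbnd : forall n, sum_n b n <= B) by (intros n; rewrite sum_n_rsum; apply HB).
  destruct (ex_finite_lim_seq_incr _ B Hincr Hbnd) as [l Hl].
  assert (Hex : ex_series b) by (exists l; exact Hl).
  split; [exact Hex|].
  apply (is_lim_seq_le (sum_n b) (fun _ => B) (Series b) B Hbnd);
    [exact (Series_correct _ Hex) | apply is_lim_seq_const].
Qed.

Hypothesis b_summable : ex_series b.

Lemma rsum_le_Series Q : rsum b Q <= Series b.
Proof.
  apply (Rle_trans _ (rsum b (S Q))); [apply rsum_le_len; auto|].
  rewrite <- sum_n_rsum; apply (is_lim_seq_incr_compare (sum_n b));
    [exact (Series_correct _ b_summable)|].
  intros n; rewrite sum_Sn; pose proof (b_ge0 (S n)); simpl; unfold plus; simpl; lra.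
Qed.

Lemma Series_ge_term k : b k <= Series b.
Proof. eapply Rle_trans; [apply (rsum_ge_term b k (S k)); auto|apply rsum_le_Series]. Qed.

Lemma Series_ge0 : 0 <= Series b.
Proof. eapply Rle_trans; [apply b_ge0 | apply (Series_ge_term 0)]. Qed.

Lemma Series_tail_small eps : 0 < eps ->
  exists Sz, forall Q, rsum (fun k => if Nat.ltb k Sz then 0 else b k) Q <= eps.
Proof.
  intros He; assert (Hc : is_lim_seq (sum_n b) (Series b)) by exact (Series_correct _ b_summable).
  apply is_lim_seq_spec in Hc; destruct (Hc (mkposreal eps He)) as [N0 HN0]; simpl in HN0.
  assert (Hhead : forall Q, rsum (fun k => if Nat.ltb k (S N0) then b k else 0) Q
                            = rsum b (Nat.min Q (S N0))).
  { induction Q as [|Q IH]; [reflexivity|]; cbn [rsum]; rewrite IH.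
    destruct (Nat.ltb_spec Q (S N0)).
    - replace (Nat.min (S Q) (S N0)) with (S Q) by lia.
      replace (Nat.min Q (S N0)) with Q by lia; reflexivity.
    - replace (Nat.min (S Q) (S N0)) with (Nat.min Q (S N0)) by lia; ring. }
  exists (S N0); intros Q; specialize (Hhead Q).
  assert (Hsplit : rsum b Q =
      rsum (fun k => if Nat.ltb k (S N0) then b k else 0) Q
      + rsum (fun k => if Nat.ltb k (S N0) then 0 else b k) Q)
    by (rewrite <- rsum_plus; apply rsum_ext; intros k _; destruct (Nat.ltb k (S N0)); ring).
  pose proof (rsum_le_Series Q).
  destruct (Nat.le_gt_cases Q (S N0)).
  - replace (Nat.min Q (S N0)) with Q in Hhead by lia; lra.
  - replace (Nat.min Q (S N0)) with (S N0) in Hhead by lia.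
    specialize (HN0 N0 (le_n _)); rewrite sum_n_rsum in HN0.
    apply Rabs_lt_between in HN0; lra.
Qed.

End NonnegSeries.

Lemma ex_series_le_R (a b : nat -> R) :
  (forall n, 0 <= a n <= b n) -> ex_series b -> ex_series a.
Proof.
  intros H Hb; apply (@ex_series_le R_AbsRing R_CompleteNormedModule a b); auto.
  intros n; unfold norm; simpl; unfold abs; simpl; rewrite Rabs_pos_eq; apply H.
Qed.

Lemma ex_series_scal_plus c (a b : nat -> R) :
  ex_series a -> ex_series b -> ex_series (fun n => c * (a n + b n)).
Proof.
  intros Ha Hb; apply (ex_series_scal_l c (fun n => a n + b n)).
  exact (ex_series_plus a b Ha Hb).
Qed.

Lemma is_lim_seq_0_bounded (u : nat -> R) : is_lim_seq u 0 -> exists B, forall n, u n <= B.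
Proof.
  intros H; apply is_lim_seq_spec in H; destruct (H (mkposreal 1 Rlt_0_1)) as [N HN]; simpl in HN.
  exists (Rmax (rsum (fun k => Rabs (u k)) N) 1); intros n.
  destruct (Nat.lt_ge_cases n N).
  - eapply Rle_trans; [apply Rle_abs|]; eapply Rle_trans; [|apply Rmax_l].
    apply (rsum_ge_term (fun k => Rabs (u k))); auto; intros; apply Rabs_pos.
  - specialize (HN n H0); rewrite Rminus_0_r in HN; apply Rabs_lt_between in HN.
    eapply Rle_trans; [|apply Rmax_r]; lra.
Qed.

Section BoundedSup.

Variables (u : nat -> R) (B : R).
Hypothesis u_le : forall n, u n <= B.

Lemma Sup_seq_Rbar_le_bound : Rbar_le (Sup_seq u) B.
Proof.
  destruct (Rbar_le_lt_dec (Sup_seq u) B) as [h|h]; [exact h|].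
  apply Sup_seq_minor_lt in h; destruct h as [n hn]; simpl in hn.
  specialize (u_le n); lra.
Qed.

Lemma Sup_seq_finite : Sup_seq u = Finite (real (Sup_seq u)).
Proof.
  pose proof Sup_seq_Rbar_le_bound as Hle.
  assert (Hge : Rbar_le (u 0%nat) (Sup_seq u)) by (apply (Sup_seq_minor_le _ _ 0%nat); apply Rle_refl).
  destruct (Sup_seq u); simpl in *; easy.
Qed.

Lemma Sup_seq_ge_term k : u k <= real (Sup_seq u).
Proof.
  assert (H : Rbar_le (u k) (Sup_seq u)) by (apply (Sup_seq_minor_le _ _ k); apply Rle_refl).
  rewrite Sup_seq_finite in H; exact H.
Qed.

Lemma Sup_seq_le_bound : real (Sup_seq u) <= B.
Proof. pose proof Sup_seq_Rbar_le_bound as H; rewrite Sup_seq_finite in H; exact H. Qed.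

End BoundedSup.

(** * The spaces [l_p] and [c_0] *)

Lemma inX_dominated X y e c : valid_space X -> 0 <= c ->
  (forall q, Cmod (y q) <= c * e q) -> (forall q, 0 <= e q <= 1) -> ex_series e -> inX X y.
Proof.
  intros HX Hc Hy He Hs; destruct X as [p|]; simpl in *.
  - apply (ex_series_le_R _ (fun q => powp c p * e q)).
    + intros q; split; [apply powp_ge0|].
      eapply Rle_trans; [apply powp_le; [split; [apply Cmod_ge_0 | apply Hy] | lra]|].
      rewrite powp_mult by (apply He || lra).
      apply Rmult_le_compat_l; [apply powp_ge0 | apply powp_le_id; auto].
    + apply (ex_series_scal_l (powp c p) e), Hs.
  - apply ex_series_lim_0 in Hs.
    apply (is_lim_seq_le_le (fun _ => 0) _ (fun q => c * e q));
      [intros q; split; [apply Cmod_ge_0 | apply Hy] | apply is_lim_seq_const |].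
    replace 0 with (c * 0) by ring; apply (is_lim_seq_scal_l _ c 0), Hs.
Qed.

Lemma inX_csub X y z : valid_space X -> inX X y -> inX X z -> inX X (csub y z).
Proof.
  intros HX Hy Hz.
  assert (Htri : forall q, Cmod (csub y z q) <= Cmod (y q) + Cmod (z q)).
  { intros q; unfold csub, Cminus; eapply Rle_trans; [apply Cmod_triangle|].
    rewrite Cmod_opp; lra. }
  destruct X as [p|]; simpl in *.
  - apply (ex_series_le_R _ (fun q => powp 2 p * (powp (Cmod (y q)) p + powp (Cmod (z q)) p)));
      [|apply ex_series_scal_plus; auto].
    intros q; split; [apply powp_ge0|].
    eapply Rle_trans; [apply powp_le; [split; [apply Cmod_ge_0 | apply Htri] | lra]|].
    apply powp_plus_le; try apply Cmod_ge_0; lra.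
  - apply (is_lim_seq_le_le (fun _ => 0) _ (fun q => Cmod (y q) + Cmod (z q)));
      [intros q; split; [apply Cmod_ge_0 | apply Htri] | apply is_lim_seq_const |].
    replace (Finite 0) with (Rbar_plus 0 0) by (simpl; f_equal; ring).
    apply is_lim_seq_plus'; auto.
Qed.

Lemma Cmod_le_normX X w k : valid_space X -> inX X w -> Cmod (w k) <= normX X w.
Proof.
  intros HX Hw; destruct X as [p|]; simpl in *.
  - rewrite <- (powpK (Cmod (w k)) p) by (apply Cmod_ge_0 || lra).
    apply powp_le; [|apply Rlt_le, Rdiv_lt_0_compat; lra].
    split; [apply powp_ge0|].
    apply (Series_ge_term (fun n => powp (Cmod (w n)) p)); auto; intros; apply powp_ge0.
  - destruct (is_lim_seq_0_bounded _ Hw) as [B HB].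
    apply (Sup_seq_ge_term (fun n => Cmod (w n)) B HB).
Qed.

Definition smallX (X : seqspace) (v : cseq) (d : R) : Prop :=
  match X with
  | Lp p => ex_series (fun k => powp (Cmod (v k)) p) /\ Series (fun k => powp (Cmod (v k)) p) <= d
  | C0space => forall k, Cmod (v k) <= d
  end.

Definition small_radius (X : seqspace) (e : R) : R :=
  match X with Lp p => powp e p / (4 * powp 2 p) | C0space => e / 4 end.

Lemma small_radius_gt0 X e : valid_space X -> 0 < e -> 0 < small_radius X e.
Proof.
  intros HX He; destruct X as [p|]; simpl in *; [|lra].
  apply Rdiv_lt_0_compat; [apply powp_gt0; auto|].
  pose proof (powp_gt0 2 p ltac:(lra)); lra.
Qed.

Lemma normX_lt_small_plus_l1 X (v w z : cseq) e : valid_space X -> 0 < e ->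
  (forall k, z k = Cplus (v k) (w k)) -> smallX X v (small_radius X e) ->
  ex_series (fun k => Cmod (w k)) -> Series (fun k => Cmod (w k)) <= Rmin (small_radius X e) 1 ->
  inX X z -> normX X z < e.
Proof.
  intros HX He Hz Hv Hw HSw HzX.
  assert (Hwk : forall k, Cmod (w k) <= Rmin (small_radius X e) 1)
    by (intros k; eapply Rle_trans; [apply (Series_ge_term (fun k => Cmod (w k))) | ];
        auto; intros; apply Cmod_ge_0).
  pose proof (Rmin_l (small_radius X e) 1); pose proof (Rmin_r (small_radius X e) 1).
  destruct X as [p|]; simpl in *.
  - destruct Hv as [Hv1 Hv2].
    assert (Hp2 : 0 < powp 2 p) by (apply powp_gt0; lra).
    set (bnd := fun k => powp 2 p * (powp (Cmod (v k)) p + Cmod (w k))).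
    assert (Hbnd : forall k, 0 <= powp (Cmod (z k)) p <= bnd k).
    { intros k; split; [apply powp_ge0|]; unfold bnd; rewrite Hz.
      eapply Rle_trans; [apply powp_le; [split; [apply Cmod_ge_0 | apply Cmod_triangle] | lra]|].
      eapply Rle_trans; [apply powp_plus_le; try apply Cmod_ge_0; lra|].
      apply Rmult_le_compat_l; [lra|]; apply Rplus_le_compat_l, powp_le_id; [|lra].
      pose proof (Hwk k); pose proof (Cmod_ge_0 (w k)); lra. }
    assert (Hbnd_sum : Series bnd <= powp e p / 2).
    { unfold bnd; rewrite Series_scal_l, Series_plus by auto.
      apply (Rle_trans _ (powp 2 p * (2 * (powp e p / (4 * powp 2 p))))); [|right; field; lra].
      apply Rmult_le_compat_l; lra. }
    assert (Hbnd_ex : ex_series bnd) by (apply ex_series_scal_plus; auto).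
    pose proof (Series_le _ _ Hbnd Hbnd_ex).
    pose proof (powp_gt0 e p He).
    rewrite <- (powpK e p) by lra.
    apply powp_lt; [|apply Rdiv_lt_0_compat; lra].
    split; [apply Series_ge0; [intros; apply powp_ge0 | exact HzX] | lra].
  - assert (Hk : forall k, Cmod (z k) <= e / 2).
    { intros k; rewrite Hz; eapply Rle_trans; [apply Cmod_triangle|].
      pose proof (Hv k); pose proof (Hwk k); lra. }
    eapply Rle_lt_trans; [apply (Sup_seq_le_bound (fun k => Cmod (z k)) (e / 2) Hk) | lra].
Qed.

Lemma iter_lamB lam n (y : cseq) k :
  Nat.iter n (lamB lam) y k = Cmult (Cpow lam n) (y (n + k)%nat).
Proof.
  revert k; induction n as [|n IH]; intros k; simpl.
  - unfold Cmult; simpl; apply injective_projections; simpl; ring.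
  - unfold lamB at 1; rewrite IH, Cmult_assoc, <- plus_n_Sm; reflexivity.
Qed.

(** * Necessity: returns to peaked sequences *)

Definition cpowseq (x : cseq) (m : nat) : cseq := fun q => Cpow (x q) m.

Lemma cpowseq_in_subalgebra X B x m :
  subalgebra X B -> B x -> (1 <= m)%nat -> B (cpowseq x m).
Proof.
  intros (_ & _ & _ & _ & Hmul) Hx Hm; induction m as [|[|m] IH]; [lia| |].
  - replace (cpowseq x 1) with x; [exact Hx|].
    apply functional_extensionality; intros q; unfold cpowseq; rewrite Cpow_1_r; reflexivity.
  - replace (cpowseq x (S (S m))) with (cmul x (cpowseq x (S m))); [apply Hmul, IH; auto; lia|].
    apply functional_extensionality; intros q; reflexivity.
Qed.

Lemma cpowseq_neq0 x m : x <> czero -> cpowseq x m <> czero.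
Proof.
  intros Hx Hxm; apply Hx, functional_extensionality; intros q.
  destruct (classic (x q = RtoC 0)) as [|Hq]; [assumption|].
  exfalso; apply (Cpow_nz (x q) m Hq); change (cpowseq x m q = czero q); rewrite Hxm; reflexivity.
Qed.

Definition peak_pos (n l m q : nat) : Prop := q = n \/ q = (n + l)%nat \/ q = (n + l + m)%nat.

Definition peak_height (r : R) (l m : nat) : R := r ^ (l * m) + 1.

Definition peak_tol (r : R) (l m : nat) : R := / (2 ^ S m * r ^ l).

Definition peak_target (r : R) (l m : nat) : cseq := fun k =>
  if (Nat.eqb k 0 || Nat.eqb k l || Nat.eqb k (l + m))%bool
  then RtoC (peak_height r l m) else RtoC 0.

Definition peak_nbhd (X : seqspace) (r : R) (l m : nat) (y : cseq) : Prop :=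
  inX X y /\ exists s, s < peak_tol r l m /\
    forall k, Cmod (Cminus (y k) (peak_target r l m k)) <= s.

Section PeakEstimates.

Variables (r : R) (l m : nat).
Hypothesis r_gt1 : 1 < r.

Lemma peak_height_ge2 : 2 <= peak_height r l m.
Proof. unfold peak_height; pose proof (pow_R1_Rle r (l * m) ltac:(lra)); lra. Qed.

Lemma Cmod_peak_target_on k : peak_pos 0 l m k -> Cmod (peak_target r l m k) = peak_height r l m.
Proof.
  intros Hk; pose proof peak_height_ge2; unfold peak_target, peak_pos in *.
  destruct (Nat.eqb_spec k 0), (Nat.eqb_spec k l), (Nat.eqb_spec k (l + m)); simpl; try lia;
    rewrite Cmod_R, Rabs_pos_eq; lra.
Qed.

Lemma Cmod_peak_target_off k : ~ peak_pos 0 l m k -> Cmod (peak_target r l m k) = 0.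
Proof.
  intros Hk; unfold peak_target, peak_pos in *.
  destruct (Nat.eqb_spec k 0), (Nat.eqb_spec k l), (Nat.eqb_spec k (l + m)); simpl; try lia.
  rewrite Cmod_0; reflexivity.
Qed.

Lemma peak_tol_gt0 : 0 < peak_tol r l m.
Proof. apply Rinv_0_lt_compat, Rmult_lt_0_compat; apply pow_lt; lra. Qed.

Lemma peak_tol_bounds :
  peak_tol r l m * 2 ^ m <= 1 /\ peak_tol r l m <= 1/2 /\ peak_tol r l m * r ^ l <= 1.
Proof.
  unfold peak_tol; simpl.
  pose proof (pow_R1_Rle 2 m ltac:(lra)); pose proof (pow_R1_Rle r l ltac:(lra)).
  assert (Hinv : forall a, 1 <= a -> / a <= 1)
    by (intros a Ha; rewrite <- Rinv_1; apply Rinv_le_contravar; lra).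
  repeat split.
  - replace (/ (2 * 2 ^ m * r ^ l) * 2 ^ m) with (/ (2 * r ^ l)) by (field; lra).
    apply Hinv; lra.
  - replace (/ (2 * 2 ^ m * r ^ l)) with (/ 2 * / (2 ^ m * r ^ l)) by (field; lra).
    pose proof (Hinv (2 ^ m * r ^ l) ltac:(nra)); lra.
  - replace (/ (2 * 2 ^ m * r ^ l) * r ^ l) with (/ (2 * 2 ^ m)) by (field; lra).
    apply Hinv; lra.
Qed.

End PeakEstimates.

Lemma peak_nbhd_open X r l m : valid_space X -> 1 < r -> openX X (peak_nbhd X r l m).
Proof.
  intros HX Hr; split; [intros y [Hy _]; exact Hy|].
  intros y [Hy [s [Hs Hk]]]; exists (peak_tol r l m - s); split; [lra|].
  intros z Hz Hzy; split; [exact Hz|]; exists (normX X (csub z y) + s); split; [lra|].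
  intros k; replace (Cminus (z k) (peak_target r l m k))
    with (Cplus (csub z y k) (Cminus (y k) (peak_target r l m k))) by (unfold csub, Cminus; ring).
  eapply Rle_trans; [apply Cmod_triangle|]; apply Rplus_le_compat; [|apply Hk].
  apply Cmod_le_normX; [exact HX | apply inX_csub; auto].
Qed.

Lemma peak_nbhd_inhabited X r l m : valid_space X -> 1 < r -> peak_nbhd X r l m (peak_target r l m).
Proof.
  intros HX Hr; pose proof (peak_height_ge2 r l m Hr); split.
  - apply (inX_dominated X _ (fun q => if Nat.ltb q (S (l + m)) then 1 else 0) (peak_height r l m));
      [exact HX | lra | | intros q; destruct (Nat.ltb q _); lra |].
    + intros q; destruct (classic (peak_pos 0 l m q)) as [Hq|Hq].
      * rewrite Cmod_peak_target_on by auto; unfold peak_pos in Hq.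
        destruct (Nat.ltb_spec q (S (l + m))); [lra | lia].
      * rewrite Cmod_peak_target_off by auto; destruct (Nat.ltb q _); lra.
    + refine (proj1 (ex_series_bounded _ _ (INR (S (l + m))) _)).
      * intros q; destruct (Nat.ltb q (S (l + m))); lra.
      * intros Q; rewrite rsum_indicator, Rmult_1_r; apply le_INR; lia.
  - exists 0; split; [apply peak_tol_gt0, Hr|]; intros k.
    unfold Cminus; rewrite Cplus_opp_r, Cmod_0; lra.
Qed.

Lemma base_below_peak (r au av e t : R) n m : 1 < r -> 0 <= av -> e < t - e ->
  r ^ n * au ^ m < e -> t - e < r ^ n * av ^ m -> au < av.
Proof.
  intros Hr Hav Het Hu Hv; pose proof (pow_lt r n ltac:(lra)).
  apply (pow_lt_reg au av m Hav); nra.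
Qed.

Lemma base_far_below_peak (r au av e t : R) n m : 1 < r -> 0 <= au -> 0 <= av ->
  0 < e -> e * 2 ^ m <= 1 -> 2 <= t ->
  r ^ n * au ^ m < e -> t - e < r ^ n * av ^ m -> 2 * au < av.
Proof.
  intros Hr Hau Hav He He2 Ht Hu Hv; pose proof (pow_lt r n ltac:(lra)).
  pose proof (pow_R1_Rle 2 m ltac:(lra)); pose proof (pow_le au m Hau).
  assert (Hav1 : 1 <= r ^ n * av ^ m) by nra.
  assert (Hratio : (2 * au) ^ m < av ^ m).
  { rewrite Rpow_mult_distr.
    assert (au ^ m * r ^ n < e * (r ^ n * av ^ m)) by nra.
    assert (au ^ m < e * av ^ m) by nra.
    pose proof (pow_le av m Hav); nra. }
  exact (pow_lt_reg _ _ m Hav Hratio).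
Qed.

Lemma peaks_comparable (r au av e t : R) n m : 1 < r -> (0 < m)%nat -> 0 <= au ->
  e <= 1/2 -> 2 <= t -> t - e < r ^ n * au ^ m -> r ^ n * av ^ m < t + e -> av < 2 * au.
Proof.
  intros Hr Hm Hau He Ht Hu Hv; pose proof (pow_lt r n ltac:(lra)).
  assert (H2 : 2 <= 2 ^ m)
    by (destruct m as [|m']; [lia|]; simpl; pose proof (pow_R1_Rle 2 m' ltac:(lra)); lra).
  assert (Hratio : av ^ m < (2 * au) ^ m).
  { rewrite Rpow_mult_distr.
    assert (r ^ n * av ^ m < 2 * (r ^ n * au ^ m)) by lra.
    assert (av ^ m < 2 * au ^ m) by nra.
    pose proof (pow_le au m Hau); nra. }
  apply (pow_lt_reg _ _ m); [lra | exact Hratio].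
Qed.

Lemma peak_exponent_gap (r a e : R) (n m l n' m' l' : nat) :
  1 < r -> (0 < m')%nat -> 0 <= a -> e * r ^ l <= 1 ->
  r ^ n * a ^ m < e -> r ^ (l' * m') <= r ^ n' * a ^ m' ->
  (l' * m' * m + (n + l) * m' < n' * m)%nat.
Proof.
  intros Hr Hm' Ha Hel H1 H2; apply (pow_lt_reg_exp r); [exact Hr|].
  assert (Hpos : forall k, 0 < r ^ k) by (intros; apply pow_lt; lra).
  assert (B1 : (r ^ n * a ^ m * r ^ l) ^ m' < 1).
  { apply pow_lt_1_compat; [|lia]; split; [|pose proof (Hpos l); nra].
    apply Rmult_le_pos; [apply Rmult_le_pos|]; try apply pow_le; lra. }
  assert (B2 : (r ^ (l' * m')) ^ m <= (r ^ n' * a ^ m') ^ m)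
    by (apply pow_incr; split; [apply pow_le; lra | exact H2]).
  rewrite !Rpow_mult_distr, <- !pow_mult in B1; rewrite Rpow_mult_distr, <- !pow_mult in B2.
  rewrite !pow_add, Nat.mul_add_distr_r, pow_add.
  replace (m * m')%nat with (m' * m)%nat in B1 by lia.
  pose proof (Hpos (n * m')%nat); pose proof (Hpos (l * m')%nat); pose proof (Hpos (n' * m)%nat).
  pose proof (pow_le a (m' * m) Ha).
  assert (r ^ (l' * m' * m) * (r ^ (n * m') * r ^ (l * m'))
          <= r ^ (n' * m) * a ^ (m' * m) * (r ^ (n * m') * r ^ (l * m')))
    by (apply Rmult_le_compat_r; [nra | exact B2]).
  nra.
Qed.

Definition peaks_clash (P Q : nat -> Prop) (u v : nat) : Prop :=
  (~ P u /\ Q u /\ P v /\ Q v) \/ (P u /\ ~ Q u /\ P v /\ Q v) \/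
  (~ P u /\ Q u /\ P v /\ ~ Q v).

Lemma peak_patterns_clash n l m n' l' m' :
  (1 <= l)%nat -> (1 <= m)%nat -> (1 <= l')%nat -> (1 <= m')%nat ->
  (n <= n')%nat -> ((n < n')%nat \/ (l, m) <> (l', m')) -> (n' <= n + l + m)%nat ->
  exists u v, (n' <= u)%nat /\ (n' <= v)%nat /\
    peaks_clash (peak_pos n l m) (peak_pos n' l' m') u v.
Proof.
  intros Hl Hm Hl' Hm' Hnn' Hne Hup; unfold peaks_clash, peak_pos.
  destruct (Nat.eq_dec n n') as [<-|Hlt].
  - assert (Hpair : l <> l' \/ m <> m').
    { destruct Hne as [|Hne]; [lia|].
      destruct (Nat.eq_dec l l'), (Nat.eq_dec m m'); subst; auto. }
    destruct (Nat.lt_total l l') as [H|[<-|H]].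
    + exists (n + l)%nat, n; lia.
    + destruct (Nat.lt_total m m') as [H|[H|H]]; [exists (n + l + m)%nat, n | lia |
        exists (n + l + m')%nat, n]; lia.
    + exists (n + l')%nat, n; lia.
  - destruct (Nat.eq_dec n' (n + l)) as [E1|E1].
    + destruct (Nat.eq_dec m l') as [E2|E2]; [exists (n' + l' + m')%nat, n'; lia|].
      destruct (Nat.eq_dec m (l' + m')) as [E3|E3];
        [exists (n' + l')%nat, n' | exists (n + l + m)%nat, n']; lia.
    + destruct (Nat.eq_dec n' (n + l + m)) as [E2|E2]; [exists (n' + l')%nat, n'; lia|].
      exists n', (n + l + m)%nat; lia.
Qed.

Section Necessity.

Variables (X : seqspace) (lam : C) (x : cseq).
Hypothesis lam_gt1 : 1 < Cmod lam.
Local Notation r := (Cmod lam).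

Definition peak_return (l m n : nat) : Prop :=
  peak_nbhd X r l m (Nat.iter n (lamB lam) (cpowseq x m)).

Lemma peak_return_coord l m n q : peak_return l m n -> (n <= q)%nat ->
  exists s, s < peak_tol r l m /\
    Rabs (r ^ n * Cmod (x q) ^ m - Cmod (peak_target r l m (q - n)%nat)) <= s.
Proof.
  intros [_ [s [Hs Hk]]] Hq; exists s; split; [exact Hs|].
  specialize (Hk (q - n)%nat); rewrite iter_lamB in Hk.
  replace (n + (q - n))%nat with q in Hk by lia.
  set (y := Cmult (Cpow lam n) (cpowseq x m q)) in Hk.
  assert (Ey : Cmod y = r ^ n * Cmod (x q) ^ m)
    by (unfold y, cpowseq; rewrite Cmod_mult, !Cmod_pow; reflexivity).
  rewrite <- Ey; apply Rabs_le; split.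
  - pose proof (Cmod_triangle_rev (peak_target r l m (q - n)%nat) y) as H.
    rewrite Cmod_minusC in H; lra.
  - pose proof (Cmod_triangle_rev y (peak_target r l m (q - n)%nat)); lra.
Qed.

Lemma peak_return_on l m n q : peak_return l m n -> peak_pos n l m q ->
  peak_height r l m - peak_tol r l m < r ^ n * Cmod (x q) ^ m < peak_height r l m + peak_tol r l m.
Proof.
  intros Hret Hq; destruct (peak_return_coord l m n q Hret) as [s [Hs Hc]];
    [unfold peak_pos in Hq; lia|].
  rewrite Cmod_peak_target_on in Hc by (exact lam_gt1 || (unfold peak_pos in *; lia)).
  apply Rabs_le_between in Hc; lra.
Qed.

Lemma peak_return_off l m n q : peak_return l m n -> (n <= q)%nat -> ~ peak_pos n l m q ->
  r ^ n * Cmod (x q) ^ m < peak_tol r l m.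
Proof.
  intros Hret Hnq Hq; destruct (peak_return_coord l m n q Hret Hnq) as [s [Hs Hc]].
  rewrite Cmod_peak_target_off in Hc by (unfold peak_pos in *; lia).
  apply Rabs_le_between in Hc; lra.
Qed.

Lemma peak_returns_no_clash l m n l' m' n' u v : (1 <= m)%nat -> (1 <= m')%nat ->
  peak_return l m n -> peak_return l' m' n' -> (n <= n')%nat -> (n' <= u)%nat -> (n' <= v)%nat ->
  ~ peaks_clash (peak_pos n l m) (peak_pos n' l' m') u v.
Proof.
  intros Hm Hm' H1 H2 Hnn' Hu Hv Hclash.
  pose proof (Cmod_ge_0 (x u)) as Hxu; pose proof (Cmod_ge_0 (x v)) as Hxv.
  pose proof (peak_tol_gt0 r l m lam_gt1) as He; pose proof (peak_tol_gt0 r l' m' lam_gt1) as He'.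
  destruct (peak_tol_bounds r l m lam_gt1) as (E1 & E2 & _).
  destruct (peak_tol_bounds r l' m' lam_gt1) as (E1' & E2' & _).
  pose proof (peak_height_ge2 r l m lam_gt1) as Ht; pose proof (peak_height_ge2 r l' m' lam_gt1) as Ht'.
  destruct Hclash as [(a & b & c & d)|[(a & b & c & d)|(a & b & c & d)]].
  - pose proof (peak_return_off l m n u H1 ltac:(lia) a) as Hu0.
    destruct (peak_return_on l m n v H1 c) as [Hv0 _].
    destruct (peak_return_on l' m' n' u H2 b) as [Hu1 _].
    destruct (peak_return_on l' m' n' v H2 d) as [_ Hv1].
    pose proof (base_far_below_peak r _ _ _ _ n m lam_gt1 Hxu Hxv He E1 Ht Hu0 Hv0).
    pose proof (peaks_comparable r _ (Cmod (x v)) _ _ n' m' lam_gt1 ltac:(lia) Hxu E2' Ht' Hu1 Hv1).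
    lra.
  - destruct (peak_return_on l m n u H1 a) as [Hu0 _].
    destruct (peak_return_on l m n v H1 c) as [_ Hv0].
    pose proof (peak_return_off l' m' n' u H2 ltac:(lia) b) as Hu1.
    destruct (peak_return_on l' m' n' v H2 d) as [Hv1 _].
    pose proof (base_far_below_peak r _ _ _ _ n' m' lam_gt1 Hxu Hxv He' E1' Ht' Hu1 Hv1).
    pose proof (peaks_comparable r _ (Cmod (x v)) _ _ n m lam_gt1 ltac:(lia) Hxu E2 Ht Hu0 Hv0).
    lra.
  - pose proof (peak_return_off l m n u H1 ltac:(lia) a) as Hu0.
    destruct (peak_return_on l m n v H1 c) as [Hv0 _].
    destruct (peak_return_on l' m' n' u H2 b) as [Hu1 _].
    pose proof (peak_return_off l' m' n' v H2 ltac:(lia) d) as Hv1.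
    pose proof (base_below_peak r _ _ (peak_tol r l m) (peak_height r l m) n m lam_gt1 Hxv
                  ltac:(lra) Hu0 Hv0).
    pose proof (base_below_peak r _ _ (peak_tol r l' m') (peak_height r l' m') n' m' lam_gt1 Hxu
                  ltac:(lra) Hv1 Hu1).
    lra.
Qed.

Lemma peak_returns_disjoint l m l' m' n :
  (1 <= l)%nat -> (1 <= m)%nat -> (1 <= l')%nat -> (1 <= m')%nat ->
  (l, m) <> (l', m') -> ~ (peak_return l m n /\ peak_return l' m' n).
Proof.
  intros Hl Hm Hl' Hm' Hne [H1 H2].
  destruct (peak_patterns_clash n l m n l' m' Hl Hm Hl' Hm' (le_n n) (or_intror Hne))
    as (u & v & Hu & Hv & Hc); [lia|].
  exact (peak_returns_no_clash l m n l' m' n u v Hm Hm' H1 H2 (le_n n) Hu Hv Hc).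
Qed.

Lemma peak_returns_apart l m l' m' n n' :
  (1 <= l)%nat -> (1 <= m)%nat -> (1 <= l')%nat -> (1 <= m')%nat ->
  peak_return l m n -> peak_return l' m' n' -> (n < n')%nat -> (n + l + m < n')%nat.
Proof.
  intros Hl Hm Hl' Hm' H1 H2 Hlt; apply Nat.nle_gt; intros Hle.
  destruct (peak_patterns_clash n l m n' l' m' Hl Hm Hl' Hm' ltac:(lia) (or_introl Hlt) Hle)
    as (u & v & Hu & Hv & Hc).
  exact (peak_returns_no_clash l m n l' m' n' u v Hm Hm' H1 H2 ltac:(lia) Hu Hv Hc).
Qed.

Lemma peak_returns_growth l m l' m' n n' :
  (1 <= l)%nat -> (1 <= m)%nat -> (1 <= l')%nat -> (1 <= m')%nat ->
  peak_return l m n -> peak_return l' m' n' -> (n < n')%nat ->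
  (l' * m' * m + (n + l) * m' < n' * m)%nat.
Proof.
  intros Hl Hm Hl' Hm' H1 H2 Hlt.
  pose proof (peak_returns_apart l m l' m' n n' Hl Hm Hl' Hm' H1 H2 Hlt) as Hfar.
  pose proof (peak_return_off l m n n' H1 ltac:(lia) ltac:(unfold peak_pos; lia)) as Hoff.
  destruct (peak_return_on l' m' n' n' H2 ltac:(left; reflexivity)) as [Hon _].
  destruct (peak_tol_bounds r l' m' lam_gt1) as (_ & Htol' & _).
  destruct (peak_tol_bounds r l m lam_gt1) as (_ & _ & Htol).
  apply (peak_exponent_gap r (Cmod (x n')) (peak_tol r l m)); try lia;
    [exact lam_gt1 | apply Cmod_ge_0 | exact Htol | exact Hoff |].
  unfold peak_height in Hon; lra.
Qed.

End Necessity.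

Definition separated_family (F : nat -> nat -> nat -> Prop) : Prop :=
  (forall l m l' m', (1 <= l)%nat -> (1 <= m)%nat -> (1 <= l')%nat ->
     (1 <= m')%nat -> (l, m) <> (l', m') -> forall n, ~ (F l m n /\ F l' m' n)) /\
  (forall l m l' m' n n', (1 <= l)%nat -> (1 <= m)%nat -> (1 <= l')%nat ->
     (1 <= m')%nat -> F l m n -> F l' m' n' -> (n' > n)%nat ->
     (n' >= n + l)%nat /\ INR n' * INR m / INR m' >= INR (n + l + l')).

Definition hypercyclic_algebra (X : seqspace) (A : (nat -> Prop) -> Prop) (T : cseq -> cseq)
  (B : cseq -> Prop) : Prop :=
  subalgebra X B /\ (exists x, B x /\ x <> czero) /\
  (forall x, B x -> x <> czero -> A_hypercyclic X A T x).

Lemma INR_ratio_ge a b c d : (0 < b)%nat -> (a * b <= c * d)%nat -> INR c * INR d / INR b >= INR a.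
Proof.
  intros Hb Hle; apply le_INR in Hle; rewrite !mult_INR in Hle.
  assert (0 < INR b) by (apply lt_0_INR; lia).
  apply Rle_ge; apply (Rmult_le_reg_r (INR b)); [lra|].
  replace (INR c * INR d / INR b * INR b) with (INR c * INR d) by (field; lra); exact Hle.
Qed.

Lemma separated_family_of_hypercyclic_algebra X A lam : valid_space X -> 1 < Cmod lam ->
  (exists B, hypercyclic_algebra X A (lamB lam) B) ->
  exists F, (forall l m, (1 <= l)%nat -> (1 <= m)%nat -> A (F l m)) /\ separated_family F.
Proof.
  intros HX Hr (B & HB & (x & Hx & Hx0) & Hhc).
  exists (peak_return X lam x); split; [|split].
  - intros l m Hl Hm; apply (Hhc (cpowseq x m)).
    + exact (cpowseq_in_subalgebra X B x m HB Hx Hm).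
    + exact (cpowseq_neq0 x m Hx0).
    + exact (peak_nbhd_open X (Cmod lam) l m HX Hr).
    + exact (ex_intro _ _ (peak_nbhd_inhabited X (Cmod lam) l m HX Hr)).
  - intros l m l' m' Hl Hm Hl' Hm' Hne n; exact (peak_returns_disjoint X lam x Hr l m l' m' n Hl Hm Hl' Hm' Hne).
  - intros l m l' m' n n' Hl Hm Hl' Hm' H1 H2 Hgt.
    pose proof (peak_returns_apart X lam x Hr l m l' m' n n' Hl Hm Hl' Hm' H1 H2 Hgt).
    pose proof (peak_returns_growth X lam x Hr l m l' m' n n' Hl Hm Hl' Hm' H1 H2 Hgt).
    assert (l' * m' <= l' * m' * m)%nat by (rewrite <- (Nat.mul_1_r (l' * m')) at 1; apply Nat.mul_le_mono_l, Hm).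
    split; [lia|]; apply INR_ratio_ge; lia.
Qed.

(** * Roots and polynomials without constant term *)

Lemma Cpow_polar (rho t : R) (m : nat) :
  Cpow (rho * cos t, rho * sin t) m = (rho ^ m * cos (INR m * t), rho ^ m * sin (INR m * t)).
Proof.
  induction m as [|m IH].
  - simpl; rewrite Rmult_0_l, cos_0, sin_0; apply injective_projections; simpl; ring.
  - rewrite Cpow_S, IH, S_INR.
    replace ((INR m + 1) * t) with (t + INR m * t) by ring.
    rewrite cos_plus, sin_plus; unfold Cmult; apply injective_projections; simpl; ring.
Qed.

Lemma Cpow_surjective (w : C) (m : nat) : (1 <= m)%nat -> exists z, Cpow z m = w.
Proof.
  intros Hm; destruct (classic (w = RtoC 0)) as [->|Hw].
  { exists (RtoC 0); destruct m as [|m]; [lia|]; rewrite Cpow_S; ring. }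
  assert (Ha : 0 < Cmod w) by (apply Cmod_gt_0, Hw).
  set (a := Cmod w) in *; destruct w as [w1 w2].
  set (u1 := w1 / a); set (u2 := w2 / a).
  assert (Hw2 : a ^ 2 = w1 ^ 2 + w2 ^ 2) by (unfold a; rewrite Cmod2_alt; reflexivity).
  assert (Hu : u1 ^ 2 + u2 ^ 2 = 1)
    by (unfold u1, u2; field_simplify; [rewrite <- Hw2; field|]; lra).
  assert (Hu1 : -1 <= u1 <= 1) by (split; nra).
  assert (Hs : sqrt (1 - u1²) = Rabs u2)
    by (rewrite <- sqrt_Rsqr_abs; f_equal; unfold Rsqr; nra).
  set (phi := if Rle_dec 0 u2 then acos u1 else - acos u1).
  assert (Hc : cos phi = u1)
    by (unfold phi; destruct (Rle_dec 0 u2); [|rewrite cos_neg]; apply cos_acos, Hu1).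
  assert (Hsn : sin phi = u2).
  { unfold phi; destruct (Rle_dec 0 u2).
    - rewrite sin_acos, Hs, Rabs_pos_eq; auto.
    - rewrite sin_neg, sin_acos, Hs, Rabs_left; [ring | lra | exact Hu1]. }
  set (rho := Rpower a (/ INR m)).
  assert (Hm' : 0 < INR m) by (apply lt_0_INR; lia).
  assert (Hrho : rho ^ m = a).
  { unfold rho; rewrite <- Rpower_pow, Rpower_mult by apply exp_pos.
    replace (/ INR m * INR m) with 1 by (field; lra); apply Rpower_1, Ha. }
  exists (rho * cos (phi / INR m), rho * sin (phi / INR m)).
  rewrite Cpow_polar; replace (INR m * (phi / INR m)) with phi by (field; lra).
  rewrite Hrho, Hc, Hsn; unfold u1, u2; apply injective_projections; simpl; field; lra.
Qed.

Definition Croot (m : nat) (w : C) : C := epsilon (inhabits (RtoC 0)) (fun z => Cpow z m = w).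

Lemma Croot_spec m w : (1 <= m)%nat -> Cpow (Croot m w) m = w.
Proof. intros Hm; exact (epsilon_spec _ _ (Cpow_surjective w m Hm)). Qed.

Open Scope C_scope.

(* Polynomials are lists of monomials (coefficient, exponent); the algebra
   generated by [x] is given by those without constant term. *)
Definition peval (P : list (C * nat)) (z : C) : C :=
  fold_right (fun c acc => fst c * Cpow z (snd c) + acc) 0 P.

Definition pmul (P Q : list (C * nat)) : list (C * nat) :=
  flat_map (fun c => map (fun d => (fst c * fst d, (snd c + snd d)%nat)) Q) P.

Definition no_constant (P : list (C * nat)) : Prop := List.Forall (fun c => (1 <= snd c)%nat) P.

Lemma peval_app P Q z : peval (P ++ Q) z = peval P z + peval Q z.
Proof. induction P as [|c P IH]; simpl; [ring|]; rewrite IH; ring. Qed.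

Lemma peval_scal a P z : peval (map (fun c => (a * fst c, snd c)) P) z = a * peval P z.
Proof. induction P as [|c P IH]; simpl; [ring|]; rewrite IH; ring. Qed.

Lemma peval_mul P Q z : peval (pmul P Q) z = peval P z * peval Q z.
Proof.
  assert (Hmono : forall a e, peval (map (fun d => (a * fst d, (e + snd d)%nat)) Q) z
                              = a * Cpow z e * peval Q z).
  { intros a e; induction Q as [|d Q IH]; simpl; [ring|]; rewrite IH, Cpow_add_r; ring. }
  induction P as [|c P IH]; simpl; [ring|].
  unfold pmul in *; simpl; rewrite peval_app, Hmono, IH; ring.
Qed.

Fixpoint csum (f : nat -> C) (D : nat) : C :=
  match D with O => 0 | S D => csum f D + f D end.

Lemma csum_ext (f g : nat -> C) D : (forall j, (j < D)%nat -> f j = g j) -> csum f D = csum g D.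
Proof. induction D as [|D IH]; intros H; simpl; [reflexivity|]; rewrite IH, H; auto. Qed.

Lemma csum_plus (f g : nat -> C) D : csum (fun j => f j + g j) D = csum f D + csum g D.
Proof. induction D as [|D IH]; simpl; [ring|]; rewrite IH; ring. Qed.

Lemma csum0 D : csum (fun _ => 0) D = 0.
Proof. induction D as [|D IH]; simpl; [reflexivity|]; rewrite IH; ring. Qed.

Lemma csum_zero_tail (f : nat -> C) D D' : (D <= D')%nat -> (forall j, (D <= j)%nat -> f j = 0) ->
  csum f D' = csum f D.
Proof. intros Hle H; induction Hle as [|D' Hle IH]; simpl; [reflexivity|]; rewrite IH, H by lia; ring. Qed.

Lemma csum_delta (v : C) e D : (e < D)%nat -> csum (fun j => if Nat.eqb j e then v else 0) D = v.
Proof.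
  intros H; induction D as [|D IH]; [lia|]; simpl; destruct (Nat.eqb_spec D e) as [->|Hne].
  - rewrite (csum_ext _ (fun _ => 0)), csum0; [ring|].
    intros j Hj; destruct (Nat.eqb_spec j e); [lia | reflexivity].
  - rewrite IH by lia; ring.
Qed.

Lemma Cmod_csum (f : nat -> C) D : Cmod (csum f D) <= rsum (fun j => Cmod (f j)) D.
Proof.
  induction D as [|D IH]; simpl; [rewrite Cmod_0; lra|].
  eapply Rle_trans; [apply Cmod_triangle | lra].
Qed.

Lemma peval_coeffs P : no_constant P ->
  exists (c : nat -> C) D, c O = 0 /\ (forall j, (D <= j)%nat -> c j = 0) /\
    forall z, peval P z = csum (fun j => c j * Cpow z j) D.
Proof.
  induction P as [|[a e] P IH]; intros HP.
  { exists (fun _ => 0), O; repeat split; auto. }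
  inversion HP as [|? ? He HP']; subst; simpl in He.
  destruct (IH HP') as (c & D & H0 & HD & Hev).
  exists (fun j => c j + (if Nat.eqb j e then a else 0)), (Nat.max D (S e)); repeat split.
  - rewrite H0; destruct (Nat.eqb_spec 0 e); [lia | ring].
  - intros j Hj; rewrite HD by lia; destruct (Nat.eqb_spec j e); [lia | ring].
  - intros z; simpl; rewrite Hev.
    rewrite (csum_ext (fun j => (c j + (if Nat.eqb j e then a else 0)) * Cpow z j)
                      (fun j => c j * Cpow z j + (if Nat.eqb j e then a * Cpow z e else 0)))
      by (intros j _; destruct (Nat.eqb_spec j e); subst; ring).
    rewrite csum_plus, csum_delta by lia.
    rewrite (csum_zero_tail (fun j => c j * Cpow z j) D (Nat.max D (S e))) by (lia || (intros j Hj; rewrite HD by exact Hj; ring)).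
    ring.
Qed.

Close Scope C_scope.

Lemma csum_lowest_term (c : nat -> C) D : c O = RtoC 0 -> (forall j, (D <= j)%nat -> c j = RtoC 0) ->
  (exists j, c j <> RtoC 0) ->
  exists m a K, (1 <= m)%nat /\ a <> RtoC 0 /\ 0 <= K /\ forall z, Cmod z <= 1 ->
    Cmod (Cminus (csum (fun j => Cmult (c j) (Cpow z j)) D) (Cmult a (Cpow z m)))
      <= K * Cmod z ^ S m.
Proof.
  intros H0 HD Hex.
  destruct (dec_inh_nat_subset_has_unique_least_element (fun j => c j <> RtoC 0)
              (fun n => classic _) Hex) as [m [[Hm Hmin] _]].
  assert (HmD : (m < D)%nat)
    by (destruct (Nat.lt_ge_cases m D) as [|HDm]; [assumption | exfalso; exact (Hm (HD m HDm))]).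
  assert (Hm1 : (1 <= m)%nat) by (destruct m; [contradiction | lia]).
  exists m, (c m), (rsum (fun j => Cmod (c j)) D); repeat split; auto.
  { apply rsum_ge0; intros; apply Cmod_ge_0. }
  intros z Hz; pose proof (Cmod_ge_0 z).
  replace (Cminus (csum (fun j => Cmult (c j) (Cpow z j)) D) (Cmult (c m) (Cpow z m)))
    with (csum (fun j => if Nat.eqb j m then RtoC 0 else Cmult (c j) (Cpow z j)) D).
  2: { assert (E : csum (fun j => Cmult (c j) (Cpow z j)) D =
            Cplus (csum (fun j => if Nat.eqb j m then RtoC 0 else Cmult (c j) (Cpow z j)) D)
                  (csum (fun j => if Nat.eqb j m then Cmult (c m) (Cpow z m) else RtoC 0) D)).
       { rewrite <- csum_plus; apply csum_ext; intros j _.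
         destruct (Nat.eqb_spec j m); subst; ring. }
       rewrite E, csum_delta by exact HmD; ring. }
  eapply Rle_trans; [apply Cmod_csum|]; rewrite <- (Rmult_comm (Cmod z ^ S m)), <- rsum_scal_l.
  apply rsum_le; intros j _; rewrite Rmult_comm.
  destruct (Nat.eqb_spec j m); [rewrite Cmod_0; apply Rmult_le_pos; [apply Cmod_ge_0 | apply pow_le; lra]|].
  destruct (Nat.lt_ge_cases j m) as [Hjm|Hjm].
  - assert (Hcj : c j = RtoC 0) by (apply NNPP; intros Hcj; specialize (Hmin j Hcj); lia).
    rewrite Hcj, Cmult_0_l, Cmod_0; apply Rmult_le_pos; [lra | apply pow_le; lra].
  - rewrite Cmod_mult, Cmod_pow; apply Rmult_le_compat_l; [apply Cmod_ge_0 | apply pow_le_decr; lra || lia].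
Qed.

Definition poly_algebra (x : cseq) (y : cseq) : Prop :=
  exists P, no_constant P /\ y = (fun q => peval P (x q)).

Lemma peval_bound P z : no_constant P -> Cmod z <= 1 ->
  Cmod (peval P z) <= fold_right (fun c acc => Cmod (fst c) + acc) 0 P * Cmod z.
Proof.
  intros HP Hz; induction HP as [|[a e] P He HP IH]; simpl; [rewrite Cmod_0; lra|].
  simpl in He; eapply Rle_trans; [apply Cmod_triangle|]; rewrite Cmod_mult, Cmod_pow.
  assert (Cmod z ^ e <= Cmod z) by (rewrite <- (pow_1 (Cmod z)) at 2; apply pow_le_decr;
                                      [split; [apply Cmod_ge_0 | exact Hz] | exact He]).
  pose proof (Cmod_ge_0 a); nra.
Qed.

Lemma poly_algebra_subalgebra X x : valid_space X -> (forall q, Cmod (x q) <= 1) ->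
  ex_series (fun q => Cmod (x q)) -> subalgebra X (poly_algebra x).
Proof.
  intros HX Hx1 Hxs; repeat split.
  - intros y (P & HP & ->).
    apply (inX_dominated X _ (fun q => Cmod (x q)) (fold_right (fun c acc => Cmod (fst c) + acc) 0 P));
      [exact HX | | intros q; apply peval_bound; auto | intros q; split; [apply Cmod_ge_0 | auto] | exact Hxs].
    clear; induction P as [|c P IH]; simpl; [lra|]; pose proof (Cmod_ge_0 (fst c)); lra.
  - exists nil; split; [constructor | reflexivity].
  - intros y z (P & HP & ->) (Q & HQ & ->); exists (P ++ Q); split; [apply Forall_app; auto|].
    apply functional_extensionality; intros q; unfold cadd; rewrite peval_app; reflexivity.
  - intros a y (P & HP & ->); exists (map (fun c => (Cmult a (fst c), snd c)) P); split.
    + apply Forall_map; eapply Forall_impl; [|exact HP]; intros c Hc; exact Hc.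
    + apply functional_extensionality; intros q; unfold cscal; rewrite peval_scal; reflexivity.
  - intros y z (P & HP & ->) (Q & HQ & ->); exists (pmul P Q); split.
    + apply Forall_flat_map; eapply Forall_impl; [|exact HP]; intros c Hc.
      apply Forall_map; eapply Forall_impl; [|exact HQ]; intros d Hd; simpl in *; lia.
    + apply functional_extensionality; intros q; unfold cmul; rewrite peval_mul; reflexivity.
Qed.

Lemma poly_algebra_gen x : poly_algebra x x.
Proof.
  exists ((RtoC 1, 1%nat) :: nil); split; [repeat constructor|].
  apply functional_extensionality; intros q; simpl; ring.
Qed.

Lemma poly_algebra_lowest_term x y : poly_algebra x y -> y <> czero ->
  exists (P : C -> C) m a K, y = (fun q => P (x q)) /\ (1 <= m)%nat /\ a <> RtoC 0 /\ 0 <= K /\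
    forall z, Cmod z <= 1 ->
      Cmod (Cminus (P z) (Cmult a (Cpow z m))) <= K * Cmod z ^ S m /\
      Cmod (P z) <= (Cmod a + K) * Cmod z ^ m.
Proof.
  intros (Pl & HP & ->) Hne.
  destruct (peval_coeffs Pl HP) as (c & D & H0 & HD & Hev).
  assert (Hex : exists j, c j <> RtoC 0).
  { apply NNPP; intros Hn; apply Hne, functional_extensionality; intros q.
    rewrite Hev, (csum_ext _ (fun _ => RtoC 0)), csum0; [reflexivity|].
    intros j _; destruct (classic (c j = RtoC 0)) as [->|Hcj]; [ring | exfalso; eauto]. }
  destruct (csum_lowest_term c D H0 HD Hex) as (m & a & K & Hm & Ha & HK & Hlow).
  exists (peval Pl), m, a, K; do 4 (split; [reflexivity || assumption|]).
  intros z Hz; rewrite Hev; specialize (Hlow z Hz); split; [exact Hlow|].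
  pose proof (Cmod_ge_0 z).
  pose proof (Cmod_triangle (Cminus (csum (fun j => Cmult (c j) (Cpow z j)) D) (Cmult a (Cpow z m)))
                            (Cmult a (Cpow z m))) as Htri.
  replace (Cplus (Cminus _ _) (Cmult a (Cpow z m))) with (csum (fun j => Cmult (c j) (Cpow z j)) D)
    in Htri by ring.
  rewrite Cmod_mult, Cmod_pow in Htri.
  assert (Cmod z ^ S m <= Cmod z ^ m) by (apply pow_le_decr; lra || lia).
  pose proof (pow_le (Cmod z) m ltac:(lra)); nra.
Qed.

(** * A dense family of finitely supported sequences *)

(* A level [l] codes, through Cantor's pairing, a length, a grid resolution,
   a sequence of grid points (as iterated pairs) and a truncation exponent. *)
Definition level (len res dig s : nat) : nat :=
  Cantor.to_nat (Cantor.to_nat (len, Cantor.to_nat (res, dig)), s).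

Definition lev_trunc (l : nat) : nat := snd (Cantor.of_nat l).
Definition lev_len (l : nat) : nat := fst (Cantor.of_nat (fst (Cantor.of_nat l))).
Definition lev_res (l : nat) : nat := fst (Cantor.of_nat (snd (Cantor.of_nat (fst (Cantor.of_nat l))))).
Definition lev_dig (l : nat) : nat := snd (Cantor.of_nat (snd (Cantor.of_nat (fst (Cantor.of_nat l))))).

Lemma level_spec len res dig s :
  lev_len (level len res dig s) = len /\ lev_res (level len res dig s) = res /\
  lev_dig (level len res dig s) = dig /\ lev_trunc (level len res dig s) = s /\
  (s <= level len res dig s)%nat.
Proof.
  unfold level, lev_len, lev_res, lev_dig, lev_trunc.
  repeat (rewrite Cantor.cancel_of_to; cbn [fst snd]); repeat split.
  pose proof (Cantor.to_nat_non_decreasing (Cantor.to_nat (len, Cantor.to_nat (res, dig))) s); lia.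
Qed.

Definition digit (c k : nat) : nat :=
  fst (Cantor.of_nat (Nat.iter k (fun c => snd (Cantor.of_nat c)) c)).

Lemma digit_surjective len (f : nat -> nat) : exists c, forall k, (k < len)%nat -> digit c k = f k.
Proof.
  revert f; induction len as [|len IH]; intros f; [exists 0%nat; intros; lia|].
  destruct (IH (fun k => f (S k))) as [c Hc]; exists (Cantor.to_nat (f 0%nat, c)).
  intros [|k] Hk; unfold digit.
  - change (Nat.iter 0 ?g ?c0) with c0; rewrite Cantor.cancel_of_to; reflexivity.
  - rewrite Nat.iter_succ_r, Cantor.cancel_of_to; apply (Hc k); lia.
Qed.

Definition zint (n : nat) : R := INR (fst (Cantor.of_nat n)) - INR (snd (Cantor.of_nat n)).

Lemma zint_surjective (z : Z) : exists n, zint n = IZR z.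
Proof.
  exists (Cantor.to_nat (Z.to_nat z, Z.to_nat (- z))); unfold zint.
  rewrite Cantor.cancel_of_to; simpl; rewrite !INR_IZR_INZ.
  assert (Hnonpos : forall w, (w <= 0)%Z -> Z.to_nat w = 0%nat) by (intros [] ?; simpl; lia).
  destruct (Z.le_gt_cases 0 z).
  - rewrite Z2Nat.id, (Hnonpos (- z)%Z) by lia; simpl; ring.
  - rewrite (Hnonpos z), Z2Nat.id by lia; simpl; rewrite opp_IZR; ring.
Qed.

Definition grid_point (res d : nat) : C :=
  (zint (fst (Cantor.of_nat d)) / INR (S res), zint (snd (Cantor.of_nat d)) / INR (S res)).

Lemma real_grid_approx (y : R) res : exists n, Rabs (y - zint n / INR (S res)) <= 1 / INR (S res).
Proof.
  set (D := INR (S res)); assert (HD : 0 < D) by (apply lt_0_INR; lia).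
  destruct (archimed (y * D)) as [A1 A2].
  destruct (zint_surjective (up (y * D) - 1)) as [n Hn]; exists n; rewrite Hn, minus_IZR.
  replace (y - (IZR (up (y * D)) - 1) / D) with ((y * D - IZR (up (y * D)) + 1) / D) by (field; lra).
  rewrite Rabs_div, (Rabs_pos_eq D) by lra.
  apply Rmult_le_compat_r; [left; apply Rinv_0_lt_compat, HD | apply Rabs_le; lra].
Qed.

Lemma grid_approx (w : C) res : exists d, Cmod (Cminus w (grid_point res d)) <= 2 / INR (S res).
Proof.
  destruct (real_grid_approx (fst w) res) as [n1 H1]; destruct (real_grid_approx (snd w) res) as [n2 H2].
  exists (Cantor.to_nat (n1, n2)); eapply Rle_trans; [apply Cmod_le_Rabs_re_im|].
  unfold grid_point; rewrite Cantor.cancel_of_to; destruct w as [w1 w2]; simpl in *.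
  unfold Rminus in H1, H2; unfold Rdiv in *; lra.
Qed.

(* [dense_seq r l] runs over the finitely supported sequences with entries in
   the grids, each one infinitely often; entries above [r ^ lev_trunc l] are cut to 0. *)
Definition dense_seq (r : R) (l k : nat) : C :=
  let v := if Nat.ltb k (lev_len l) then grid_point (lev_res l) (digit (lev_dig l) k) else RtoC 0 in
  if Rle_dec (Cmod v) (r ^ lev_trunc l) then v else RtoC 0.

Lemma Cmod_dense_seq_le r l k : 0 < r -> Cmod (dense_seq r l k) <= r ^ lev_trunc l.
Proof.
  intros Hr; unfold dense_seq; destruct (Rle_dec _ _); [assumption|].
  rewrite Cmod_0; apply pow_le; lra.
Qed.

Lemma dense_seq_out r l k : (lev_len l <= k)%nat -> dense_seq r l k = RtoC 0.
Proof.
  intros Hk; unfold dense_seq; destruct (Nat.ltb_spec k (lev_len l)); [lia|].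
  destruct (Rle_dec _ _); reflexivity.
Qed.

Lemma dense_seq_approx_finite r (u : cseq) (a : C) len eta M : 1 < r -> a <> RtoC 0 -> 0 < eta ->
  exists l, (M <= l)%nat /\
    (forall k, (k < len)%nat -> Cmod (Cminus (Cmult a (dense_seq r l k)) (u k)) <= eta) /\
    (forall k, (len <= k)%nat -> dense_seq r l k = RtoC 0).
Proof.
  intros Hr Ha He; assert (Ha' : 0 < Cmod a) by (apply Cmod_gt_0, Ha).
  destruct (INR_unbounded (2 * Cmod a / eta)) as [res Hres].
  assert (Hgrid : Cmod a * (2 / INR (S res)) <= eta).
  { rewrite S_INR; apply (Rmult_lt_compat_r eta) in Hres; [|exact He].
    unfold Rdiv in *; rewrite Rmult_assoc, Rinv_l, Rmult_1_r in Hres by lra.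
    pose proof (pos_INR res).
    apply (Rmult_le_reg_r (INR res + 1)); [lra|].
    rewrite Rmult_assoc, (Rmult_assoc 2), Rinv_l, Rmult_1_r by lra; nra. }
  set (f := fun k => epsilon (inhabits 0%nat)
              (fun d => Cmod (Cminus (Cdiv (u k) a) (grid_point res d)) <= 2 / INR (S res))).
  assert (Hf : forall k, Cmod (Cminus (Cdiv (u k) a) (grid_point res (f k))) <= 2 / INR (S res))
    by (intros k; exact (epsilon_spec _ _ (grid_approx (Cdiv (u k) a) res))).
  destruct (digit_surjective len f) as [c Hc].
  destruct (pow_unbounded r (rsum (fun k => Cmod (grid_point res (f k))) len) M Hr) as (s & Hs & Hbig).
  destruct (level_spec len res c s) as (D1 & D2 & D3 & D4 & D5).
  exists (level len res c s); split; [lia|split].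
  - intros k Hk.
    assert (Hk' : dense_seq r (level len res c s) k = grid_point res (f k)).
    { unfold dense_seq; rewrite D1, D2, D3, D4; destruct (Nat.ltb_spec k len); [|lia].
      rewrite Hc by exact Hk; destruct (Rle_dec _ _) as [|Hn]; [reflexivity|].
      exfalso; apply Hn; eapply Rle_trans; [|exact Hbig].
      apply (rsum_ge_term (fun k => Cmod (grid_point res (f k)))); [intros; apply Cmod_ge_0 | exact Hk]. }
    rewrite Hk'.
    replace (Cminus (Cmult a (grid_point res (f k))) (u k))
      with (Copp (Cmult a (Cminus (Cdiv (u k) a) (grid_point res (f k))))) by (field; exact Ha).
    rewrite Cmod_opp, Cmod_mult; eapply Rle_trans; [|exact Hgrid].
    apply Rmult_le_compat_l; [apply Cmod_ge_0 | apply Hf].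
  - intros k Hk; apply dense_seq_out; rewrite D1; exact Hk.
Qed.

Lemma dense_seq_approx X r u a d M : valid_space X -> 1 < r -> inX X u -> a <> RtoC 0 -> 0 < d ->
  exists l, (M <= l)%nat /\ smallX X (fun k => Cminus (Cmult a (dense_seq r l k)) (u k)) d.
Proof.
  intros HX Hr Hu Ha Hd; destruct X as [p|]; simpl in *.
  - destruct (Series_tail_small (fun k => powp (Cmod (u k)) p) (fun k => powp_ge0 _ _) Hu (d / 2))
      as [len Hlen]; [lra|].
    set (eta := Rmin 1 (d / (2 * (INR len + 1)))).
    pose proof (pos_INR len).
    assert (Heta : 0 < eta) by (apply Rmin_pos; [lra | apply Rdiv_lt_0_compat; lra]).
    assert (Heta1 : eta <= 1) by apply Rmin_l.
    assert (Heta_len : INR len * eta <= d / 2).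
    { apply (Rle_trans _ (INR len * (d / (2 * (INR len + 1)))));
        [apply Rmult_le_compat_l; [lra | apply Rmin_r]|].
      replace (INR len * (d / (2 * (INR len + 1)))) with (d / 2 * (INR len / (INR len + 1)))
        by (field; lra).
      assert (INR len / (INR len + 1) <= 1)
        by (apply (Rmult_le_reg_r (INR len + 1)); [lra|]; field_simplify; lra).
      assert (0 <= INR len / (INR len + 1)) by (apply Rdiv_le_0_compat; lra).
      nra. }
    destruct (dense_seq_approx_finite r u a len eta M Hr Ha Heta) as (l & Hl & Hin & Hout).
    exists l; split; [exact Hl|].
    apply ex_series_bounded; [intros; apply powp_ge0|]; intros Q.
    apply (Rle_trans _ (rsum (fun k => (if Nat.ltb k len then eta else 0)
                                     + (if Nat.ltb k len then 0 else powp (Cmod (u k)) p)) Q)).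
    + apply rsum_le; intros k _; destruct (Nat.ltb_spec k len) as [Hk|Hk]; cbn beta iota.
      * pose proof (Hin k Hk); pose proof (Cmod_ge_0 (Cminus (Cmult a (dense_seq r l k)) (u k))).
        eapply Rle_trans; [apply powp_le_id; [split; lra | exact HX] | lra].
      * rewrite Hout, Cmult_0_r by exact Hk.
        replace (Cminus (RtoC 0) (u k)) with (Copp (u k)) by ring; rewrite Cmod_opp; lra.
    + rewrite rsum_plus, rsum_indicator; pose proof (Hlen Q).
      assert (INR (Nat.min Q len) <= INR len) by (apply le_INR; lia).
      nra.
  - apply is_lim_seq_spec in Hu; destruct (Hu (mkposreal d Hd)) as [len Hlen]; simpl in Hlen.
    destruct (dense_seq_approx_finite r u a len d M Hr Ha Hd) as (l & Hl & Hin & Hout).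
    exists l; split; [exact Hl|]; intros k; destruct (Nat.lt_ge_cases k len) as [Hk|Hk]; [auto|].
    rewrite Hout, Cmult_0_r by exact Hk; replace (Cminus (RtoC 0) (u k)) with (Copp (u k)) by ring.
    specialize (Hlen k Hk); rewrite Rminus_0_r, Rabs_pos_eq in Hlen by apply Cmod_ge_0.
    rewrite Cmod_opp; lra.
Qed.

(** * Sufficiency: the blockwise generator *)

(* [gap K0 K l m] is the index fed to the family: it recovers [l] and is large
   enough to absorb all the constants of the level [l]. *)
Definition gap (K0 K l m : nat) : nat :=
  Cantor.to_nat (l, lev_trunc l * lev_trunc l + K0 * (lev_len l + l + 2 * m + K))%nat.

Lemma gap_ge K0 K l m :
  (l + lev_trunc l * lev_trunc l + K0 * (lev_len l + l + 2 * m + K) <= gap K0 K l m)%nat.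
Proof. unfold gap; pose proof (Cantor.to_nat_non_decreasing l (lev_trunc l * lev_trunc l + K0 * (lev_len l + l + 2 * m + K))); lia. Qed.

Lemma gap_inj K0 K l l' m m' : gap K0 K l m = gap K0 K l' m' -> l = l'.
Proof.
  unfold gap; intros H; apply (f_equal Cantor.of_nat) in H.
  rewrite !Cantor.cancel_of_to in H; congruence.
Qed.

Definition construction_params (lam : C) (F : nat -> nat -> nat -> Prop) (K0 K : nat) : Prop :=
  separated_family F /\ 1 < Cmod lam /\ 2 <= Cmod lam ^ K0 /\ (2 <= K)%nat /\
  / Cmod lam <= 1 - / INR K.

Lemma construction_params_exist lam F : separated_family F -> 1 < Cmod lam ->
  exists K0 K, construction_params lam F K0 K.
Proof.
  intros HF Hr; set (r := Cmod lam) in *.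
  destruct (pow_unbounded r 2 0 Hr) as (K0 & _ & HK0).
  destruct (INR_unbounded (r / (r - 1))) as [N HN].
  exists K0, (Nat.max N 2); refine (conj HF (conj Hr (conj HK0 (conj _ _)))); [lia|].
  assert (HK : INR N <= INR (Nat.max N 2)) by (apply le_INR; lia).
  assert (HK2 : 2 <= INR (Nat.max N 2)) by (replace 2 with (INR 2) by (simpl; ring); apply le_INR; lia).
  assert (/ INR (Nat.max N 2) < (r - 1) / r).
  { replace ((r - 1) / r) with (/ (r / (r - 1))) by (field; lra).
    apply Rinv_lt_contravar; [apply Rmult_lt_0_compat; [apply Rdiv_lt_0_compat|]|]; lra. }
  assert ((r - 1) / r = 1 - / r) by (field; lra); fold r; lra.
Qed.

Definition decay (K m : nat) : R := 1 - / (INR K * INR m).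

Lemma decay_spec K m r : (2 <= K)%nat -> (1 <= m)%nat -> 1 < r -> / r <= 1 - / INR K ->
  1/2 <= decay K m /\ decay K m < 1 /\ / r <= decay K m ^ m /\ / (1 - decay K m) = INR K * INR m.
Proof.
  intros HK Hm Hr HKr.
  assert (HK' : 2 <= INR K) by (replace 2 with (INR 2) by (simpl; ring); apply le_INR; lia).
  assert (Hm' : 1 <= INR m) by (replace 1 with (INR 1) by (simpl; ring); apply le_INR; lia).
  assert (Hi : 0 < / (INR K * INR m) <= 1/2).
  { split; [apply Rinv_0_lt_compat; nra|].
    apply (Rle_trans _ (/ 2)); [apply Rinv_le_contravar; nra | lra]. }
  unfold decay; repeat split; try lra.
  - eapply Rle_trans; [exact HKr|]; eapply Rle_trans; [|apply bernoulli_decr; lra].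
    replace (INR m * / (INR K * INR m)) with (/ INR K) by (field; lra); lra.
  - replace (1 - (1 - / (INR K * INR m))) with (/ (INR K * INR m)) by ring; apply Rinv_inv.
Qed.

Lemma block_coord_decay (r p a : R) (n m m' n' z s' h h' : nat) :
  1 < r -> 0 < p <= 1 -> / r <= p ^ m' -> (1 <= m)%nat -> (1 <= m')%nat -> 0 <= a ->
  r ^ n' * a ^ m' <= r ^ s' -> ((n + h + h') * m' <= z * m)%nat -> (z <= n')%nat ->
  r ^ n * a ^ m <= r ^ (s' * m) * / r ^ (h + h') * p ^ (n' - z).
Proof.
  intros Hr Hp Hpm Hm Hm' Ha H1 H2 H3; set (j := (n' - z)%nat).
  assert (Hpos : forall e, 0 < r ^ e) by (intros; apply pow_lt; lra).
  assert (S1 : a ^ (m * m') * r ^ (n' * m) <= r ^ (s' * m)).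
  { assert (T : (r ^ n' * a ^ m') ^ m <= (r ^ s') ^ m)
      by (apply pow_incr; split; [apply Rmult_le_pos; [left; auto | apply pow_le; auto] | exact H1]).
    rewrite Rpow_mult_distr, <- !pow_mult in T; rewrite (Nat.mul_comm m m'); lra. }
  assert (S2 : r ^ (n * m') * r ^ ((h + h') * m') * r ^ j <= r ^ (n' * m))
    by (rewrite <- !pow_add; apply Rle_pow; [lra | unfold j; nia]).
  assert (Hlhs : (r ^ n * a ^ m) ^ m' * (r ^ ((h + h') * m') * r ^ j) <= r ^ (s' * m)).
  { rewrite Rpow_mult_distr, <- !pow_mult; pose proof (pow_le a (m * m') Ha).
    replace (r ^ (n * m') * a ^ (m * m') * (r ^ ((h + h') * m') * r ^ j))
      with (a ^ (m * m') * (r ^ (n * m') * r ^ ((h + h') * m') * r ^ j)) by ring.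
    eapply Rle_trans; [|exact S1]; apply Rmult_le_compat_l; assumption. }
  set (c := r ^ (s' * m) * / r ^ (h + h')).
  assert (Hc : 0 < c) by (apply Rmult_lt_0_compat; [auto | apply Rinv_0_lt_compat; auto]).
  assert (Hrhs : r ^ (s' * m) <= (c * p ^ j) ^ m' * (r ^ ((h + h') * m') * r ^ j)).
  { assert (A1 : (/ r) ^ j <= (p ^ m') ^ j)
      by (apply pow_incr; split; [left; apply Rinv_0_lt_compat; lra | exact Hpm]).
    assert (A2 : c ^ m' * r ^ ((h + h') * m') = r ^ (s' * m * m')).
    { unfold c; rewrite Rpow_mult_distr, <- pow_mult, pow_inv, <- pow_mult.
      field; apply Rgt_not_eq, Hpos. }
    assert (A3 : (/ r) ^ j * r ^ j = 1) by (rewrite pow_inv; field; apply Rgt_not_eq, Hpos).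
    assert (A4 : r ^ (s' * m) <= r ^ (s' * m * m')) by (apply Rle_pow; [lra | nia]).
    pose proof (pow_le c m' ltac:(lra)); pose proof (Hpos ((h + h') * m')%nat); pose proof (Hpos j).
    replace ((c * p ^ j) ^ m') with (c ^ m' * (p ^ m') ^ j)
      by (rewrite Rpow_mult_distr, <- !pow_mult; f_equal; f_equal; lia).
    assert (c ^ m' * (/ r) ^ j * (r ^ ((h + h') * m') * r ^ j) = r ^ (s' * m * m'))
      by (rewrite <- A2, <- (Rmult_1_r (c ^ m' * r ^ _)), <- A3; ring).
    assert (c ^ m' * (/ r) ^ j * (r ^ ((h + h') * m') * r ^ j)
            <= c ^ m' * (p ^ m') ^ j * (r ^ ((h + h') * m') * r ^ j))
      by (apply Rmult_le_compat_r; [nra | apply Rmult_le_compat_l; assumption]).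
    lra. }
  assert (Hq : 0 < r ^ ((h + h') * m') * r ^ j) by (apply Rmult_lt_0_compat; auto).
  apply (pow_le_reg _ _ m'); [lia | apply Rmult_le_pos; [lra | apply pow_le; lra]|].
  apply (Rmult_le_reg_r _ _ _ Hq); lra.
Qed.

Section Construction.

Variables (lam : C) (F : nat -> nat -> nat -> Prop) (K0 K : nat).
Hypothesis params : construction_params lam F K0 K.
Local Notation r := (Cmod lam).

Lemma params_lam_gt1 : 1 < r.
Proof. apply params. Qed.

Lemma params_K0_ge1 : (1 <= K0)%nat.
Proof.
  destruct params as (_ & Hr & HK0 & _); destruct K0; [simpl in HK0; lra | lia].
Qed.

Definition block_start (l m n : nat) : Prop :=
  F (gap K0 K l m) m n /\ (l + m + lev_trunc l < n)%nat.

Lemma block_start_unique l m l' m' n : (1 <= l)%nat -> (1 <= m)%nat -> (1 <= l')%nat -> (1 <= m')%nat ->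
  block_start l m n -> block_start l' m' n -> l = l' /\ m = m'.
Proof.
  intros Hl Hm Hl' Hm' [H1 _] [H2 _]; pose proof (gap_ge K0 K l m); pose proof (gap_ge K0 K l' m').
  destruct (classic ((gap K0 K l m, m) = (gap K0 K l' m', m'))) as [E|E].
  - injection E as E1 E2; split; [exact (gap_inj K0 K l l' m m' E1) | exact E2].
  - exfalso; apply (proj1 (proj1 params) (gap K0 K l m) m (gap K0 K l' m') m') with n; auto; lia.
Qed.

Lemma block_start_growth l m l' m' n n' : (1 <= l)%nat -> (1 <= m)%nat -> (1 <= l')%nat -> (1 <= m')%nat ->
  block_start l m n -> block_start l' m' n' -> (n < n')%nat ->
  (n + gap K0 K l m <= n')%nat /\ ((n + gap K0 K l m + gap K0 K l' m') * m' <= n' * m)%nat.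
Proof.
  intros Hl Hm Hl' Hm' [H1 _] [H2 _] Hlt; pose proof (gap_ge K0 K l m); pose proof (gap_ge K0 K l' m').
  destruct (proj2 (proj1 params) (gap K0 K l m) m (gap K0 K l' m') m' n n') as [A1 A2];
    auto; try lia.
  split; [lia|].
  assert (0 < INR m') by (apply lt_0_INR; lia).
  apply Rge_le, (Rmult_le_compat_r (INR m')) in A2; [|lra].
  replace (INR n' * INR m / INR m' * INR m') with (INR n' * INR m) in A2 by (field; lra).
  rewrite <- !mult_INR in A2; apply INR_le in A2; exact A2.
Qed.

Definition in_block (t : nat * nat * nat * nat) (q : nat) : Prop :=
  let '(l, m, n, k) := t in
  (1 <= l)%nat /\ (1 <= m)%nat /\ block_start l m n /\ (k < lev_len l)%nat /\ q = (n + k)%nat.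

Lemma in_block_ordered l m n k l' m' n' k' q :
  in_block (l, m, n, k) q -> in_block (l', m', n', k') q -> (n' < n)%nat -> False.
Proof.
  intros (Hl & Hm & HG & Hk & Hq) (Hl' & Hm' & HG' & Hk' & Hq') Hlt.
  destruct (block_start_growth l' m' l m n' n Hl' Hm' Hl Hm HG' HG Hlt) as [A _].
  pose proof (gap_ge K0 K l' m'); pose proof params_K0_ge1; nia.
Qed.

Lemma in_block_unique t t' q : in_block t q -> in_block t' q -> t = t'.
Proof.
  destruct t as [[[l m] n] k], t' as [[[l' m'] n'] k']; intros H1 H2.
  destruct (Nat.lt_total n n') as [h|[<-|h]].
  - exfalso; exact (in_block_ordered l' m' n' k' l m n k q H2 H1 h).
  - destruct H1 as (Hl & Hm & HG & Hk & Hq), H2 as (Hl' & Hm' & HG' & Hk' & Hq').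
    destruct (block_start_unique l m l' m' n Hl Hm Hl' Hm' HG HG') as [<- <-].
    f_equal; lia.
  - exfalso; exact (in_block_ordered l m n k l' m' n' k' q H1 H2 h).
Qed.

(* On the block of a start [n] for [(l, m)], [lam^n x^m] reproduces [dense_seq r l]. *)
Definition block_value (t : nat * nat * nat * nat) : C :=
  let '(l, m, n, k) := t in Croot m (Cdiv (dense_seq r l k) (Cpow lam n)).

Definition xseq (q : nat) : C :=
  match excluded_middle_informative (exists t, in_block t q) with
  | left H => block_value (epsilon (inhabits (0, 0, 0, 0)%nat) (fun t => in_block t q))
  | right _ => RtoC 0
  end.

Lemma xseq_in_block t q : in_block t q -> xseq q = block_value t.
Proof.
  intros H; unfold xseq; destruct (excluded_middle_informative _) as [e|e]; [|exfalso; eauto].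
  f_equal; apply (in_block_unique _ _ q); [apply epsilon_spec; exact e | exact H].
Qed.

Lemma xseq_out q : ~ (exists t, in_block t q) -> xseq q = RtoC 0.
Proof. intros H; unfold xseq; destruct (excluded_middle_informative _); [contradiction | reflexivity]. Qed.

Lemma xseq_block_pow l m n k : in_block (l, m, n, k) (n + k) ->
  Cmult (Cpow lam n) (Cpow (xseq (n + k)) m) = dense_seq r l k.
Proof.
  intros H; rewrite (xseq_in_block _ _ H); simpl.
  destruct H as (_ & Hm & _); rewrite Croot_spec by exact Hm.
  assert (Hl : lam <> RtoC 0)
    by (intros E; pose proof params_lam_gt1; rewrite E, Cmod_0 in *; lra).
  field; apply Cpow_nz, Hl.
Qed.

Lemma xseq_block_le l m n k : in_block (l, m, n, k) (n + k) ->
  r ^ n * Cmod (xseq (n + k)) ^ m <= r ^ lev_trunc l.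
Proof.
  intros H; pose proof (f_equal Cmod (xseq_block_pow l m n k H)) as E.
  rewrite Cmod_mult, !Cmod_pow in E; rewrite E.
  apply Cmod_dense_seq_le; pose proof params_lam_gt1; lra.
Qed.

Lemma Cmod_xseq_le1 q : Cmod (xseq q) <= 1.
Proof.
  pose proof params_lam_gt1 as Hr.
  destruct (classic (exists t, in_block t q)) as [[[[[l m] n] k] Ht]|Hn].
  - pose proof Ht as (_ & Hm & [_ HN] & _ & ->).
    pose proof (xseq_block_le l m n k Ht) as B.
    assert (r ^ lev_trunc l <= r ^ n) by (apply Rle_pow; [lra | lia]).
    pose proof (pow_lt r n ltac:(lra)).
    apply (pow_le_reg _ _ m); [lia | lra|]; rewrite pow1.
    apply (Rmult_le_reg_l (r ^ n)); lra.
  - rewrite xseq_out, Cmod_0 by exact Hn; lra.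
Qed.


Definition next_start (n l m : nat) : nat :=
  epsilon (inhabits 0%nat) (fun z => (block_start l m z /\ (n < z)%nat) /\
                                     forall k, block_start l m k /\ (n < k)%nat -> (z <= k)%nat).

Lemma next_start_spec n l m n' : block_start l m n' -> (n < n')%nat ->
  block_start l m (next_start n l m) /\ (n < next_start n l m)%nat /\ (next_start n l m <= n')%nat.
Proof.
  intros H Hn.
  destruct (dec_inh_nat_subset_has_unique_least_element (fun k => block_start l m k /\ (n < k)%nat)
              (fun k => classic _) (ex_intro _ n' (conj H Hn))) as [z [Hz _]].
  pose proof (epsilon_spec (inhabits 0%nat)
    (fun z => (block_start l m z /\ (n < z)%nat) /\
              forall k, block_start l m k /\ (n < k)%nat -> (z <= k)%nat) (ex_intro _ z Hz)) as Hspec.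
  fold (next_start n l m) in Hspec; destruct Hspec as ([Hs Hlt] & Hmin).
  split; [exact Hs | split; [exact Hlt | apply Hmin; auto]].
Qed.

(* The weight dominating the contribution, to the tail of a block starting at
   [n], of the blocks of [(l', m')] starting after [n]; the decay in [q] is what
   makes the infinitely many such blocks summable. *)
Definition tail_weight (n l' m' q : nat) : R :=
  if (Nat.leb 1 l' && Nat.leb 1 m' && Nat.leb (next_start n l' m') q)%bool then
    r ^ (lev_trunc l' * lev_trunc l') * / r ^ gap K0 K l' m' * 2 ^ lev_len l'
    * decay K m' ^ (q - next_start n l' m')
  else 0.

Lemma tail_weight_ge0 n l' m' q : 0 <= tail_weight n l' m' q.
Proof.
  destruct params as (_ & Hr & _ & HK & HKr); unfold tail_weight.
  destruct (Nat.leb_spec 1 l'), (Nat.leb_spec 1 m') as [Hm'|],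
    (Nat.leb_spec (next_start n l' m') q); simpl; try lra.
  destruct (decay_spec K m' r HK Hm' Hr HKr) as [R1 _].
  repeat apply Rmult_le_pos; try apply pow_le; try lra.
  left; apply Rinv_0_lt_compat, pow_lt; lra.
Qed.

Lemma in_block_after_block l m n k l' m' n' k' : (1 <= l)%nat -> (1 <= m)%nat ->
  block_start l m n -> (lev_len l <= k)%nat -> in_block (l', m', n', k') (n + k) -> (n < n')%nat.
Proof.
  intros Hl Hm HG Hk (Hl' & Hm' & HG' & Hk' & Hq).
  pose proof params_K0_ge1; destruct (Nat.lt_total n n') as [h|[<-|h]]; [exact h| |]; exfalso.
  - destruct (block_start_unique l m l' m' n Hl Hm Hl' Hm' HG HG') as [<- <-]; lia.
  - destruct (block_start_growth l' m' l m n' n Hl' Hm' Hl Hm HG' HG h) as [A _].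
    pose proof (gap_ge K0 K l' m'); nia.
Qed.

Lemma xseq_tail_coord l m n k l' m' n' k' : (1 <= l)%nat -> (1 <= m)%nat ->
  block_start l m n -> (lev_len l <= k)%nat -> in_block (l', m', n', k') (n + k) ->
  r ^ n * Cmod (xseq (n + k)) ^ m <= r ^ (m * m) * / r ^ gap K0 K l m * tail_weight n l' m' (n + k).
Proof.
  intros Hl Hm HG Hk Hb; destruct params as (_ & Hr & _ & HK & HKr).
  pose proof (in_block_after_block l m n k l' m' n' k' Hl Hm HG Hk Hb) as Hnn'.
  pose proof Hb as (Hl' & Hm' & HG' & Hk' & Hq).
  assert (Hb' : in_block (l', m', n', k') (n' + k')) by (rewrite <- Hq; exact Hb).
  pose proof (xseq_block_le l' m' n' k' Hb') as Hxm; rewrite <- Hq in Hxm.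
  set (q := (n + k)%nat) in *; set (z := next_start n l' m').
  destruct (next_start_spec n l' m' n' HG' Hnn') as (HGz & Hnz & Hzn'); fold z in HGz, Hnz, Hzn'.
  destruct (block_start_growth l m l' m' n z Hl Hm Hl' Hm' HG HGz Hnz) as [_ Hgrowth].
  destruct (decay_spec K m' r HK Hm' Hr HKr) as (R1 & R2 & R3 & _).
  set (a := Cmod (xseq q)) in *; set (rho := decay K m') in *.
  set (h := gap K0 K l m) in *; set (h' := gap K0 K l' m') in *.
  set (s' := lev_trunc l') in *; set (L' := lev_len l') in *.
  assert (Hpos : forall e, 0 < r ^ e) by (intros; apply pow_lt; lra).
  pose proof (block_coord_decay r rho a n m m' n' z s' h h' Hr ltac:(lra) R3 Hm Hm' (Cmod_ge_0 _) Hxm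
                Hgrowth Hzn') as C1.
  assert (C2 : rho ^ (n' - z) <= 2 ^ L' * rho ^ (q - z)).
  { replace (q - z)%nat with ((n' - z) + k')%nat by lia; rewrite pow_add.
    assert (T : (1/2) ^ L' <= rho ^ k')
      by (eapply Rle_trans; [apply pow_le_decr; [lra | apply Nat.lt_le_incl, Hk'] | apply pow_incr; lra]).
    assert (T2 : 2 ^ L' * (1/2) ^ L' = 1)
      by (rewrite <- Rpow_mult_distr; replace (2 * (1/2)) with 1 by field; apply pow1).
    pose proof (pow_le rho (n' - z) ltac:(lra)); pose proof (pow_lt 2 L' ltac:(lra)).
    assert (2 ^ L' * (1/2) ^ L' <= 2 ^ L' * rho ^ k') by (apply Rmult_le_compat_l; lra).
    nra. }
  assert (C3 : r ^ (s' * m) <= r ^ (m * m) * r ^ (s' * s')) by (rewrite <- pow_add; apply Rle_pow; [lra | nia]).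
  assert (Hw : tail_weight n l' m' q = r ^ (s' * s') * / r ^ h' * 2 ^ L' * rho ^ (q - z)).
  { unfold tail_weight; fold z.
    destruct (Nat.leb_spec 1 l'), (Nat.leb_spec 1 m'), (Nat.leb_spec z q); try lia; reflexivity. }
  rewrite Hw; eapply Rle_trans; [exact C1|].
  rewrite pow_add, Rinv_mult.
  pose proof (Rinv_0_lt_compat _ (Hpos h)); pose proof (Rinv_0_lt_compat _ (Hpos h')).
  pose proof (pow_le rho (n' - z) ltac:(lra)).
  apply (Rle_trans _ ((r ^ (m * m) * r ^ (s' * s')) * (/ r ^ h * / r ^ h') * (2 ^ L' * rho ^ (q - z)))).
  - apply Rmult_le_compat; [apply Rmult_le_pos; [left; auto | nra] | assumption | |assumption].
    apply Rmult_le_compat_r; [nra | exact C3].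
  - right; ring.
Qed.

Lemma gap_absorbs_constants l' m' :
  r ^ (lev_trunc l' * lev_trunc l') * (2 ^ lev_len l' * 2 ^ l' * 2 ^ m' * (INR m' * INR K))
  <= r ^ gap K0 K l' m'.
Proof.
  destruct params as (_ & Hr & HK0 & _); set (E := (lev_len l' + l' + 2 * m' + K)%nat).
  apply (Rle_trans _ (r ^ (lev_trunc l' * lev_trunc l') * 2 ^ E)).
  - apply Rmult_le_compat_l; [apply pow_le; lra|]; unfold E.
    replace (2 * m')%nat with (m' + m')%nat by lia; rewrite !pow_add.
    pose proof (INR_le_pow2 m'); pose proof (INR_le_pow2 K); pose proof (pos_INR m'); pose proof (pos_INR K).
    assert (0 < 2 ^ lev_len l' * 2 ^ l' * 2 ^ m') by (repeat apply Rmult_lt_0_compat; apply pow_lt; lra).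
    assert (INR m' * INR K <= 2 ^ m' * 2 ^ K) by (apply Rmult_le_compat; auto).
    nra.
  - apply (Rle_trans _ (r ^ (lev_trunc l' * lev_trunc l' + K0 * E)));
      [|apply Rle_pow; [lra | pose proof (gap_ge K0 K l' m'); unfold E; lia]].
    rewrite pow_add, (pow_mult r K0 E).
    apply Rmult_le_compat_l; [apply pow_le; lra | apply pow_incr; lra].
Qed.

Lemma tail_weight_sum n l' m' Q :
  rsum (fun k => tail_weight n l' m' (n + k)) Q <= (1/2) ^ l' * (1/2) ^ m'.
Proof.
  destruct params as (_ & Hr & _ & HK & HKr).
  assert (Hhalf : 0 <= (1/2) ^ l' * (1/2) ^ m') by (apply Rmult_le_pos; apply pow_le; lra).
  assert (Hdeg : (l' = 0 \/ m' = 0)%nat -> rsum (fun k => tail_weight n l' m' (n + k)) Q = 0).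
  { intros H0; rewrite (rsum_ext _ (fun _ => 0)), rsum_const; [ring|]; intros k _; unfold tail_weight.
    destruct (Nat.leb_spec 1 l'), (Nat.leb_spec 1 m'); simpl; [lia | reflexivity ..]. }
  destruct (Nat.eq_dec l' 0) as [|Hl']; [rewrite Hdeg; auto|].
  destruct (Nat.eq_dec m' 0) as [|Hm']; [rewrite Hdeg; auto|].
  destruct (decay_spec K m' r HK ltac:(lia) Hr HKr) as (R1 & R2 & _ & R4).
  set (z := next_start n l' m'); set (rho := decay K m') in *.
  set (s := lev_trunc l'); set (L := lev_len l'); set (h := gap K0 K l' m').
  set (Ct := r ^ (s * s) * / r ^ h * 2 ^ L).
  assert (Hpos : forall e, 0 < r ^ e) by (intros; apply pow_lt; lra).
  assert (HCt : 0 <= Ct)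
    by (unfold Ct; repeat apply Rmult_le_pos; try apply pow_le; try lra;
        left; apply Rinv_0_lt_compat, Hpos).
  rewrite (rsum_ext _ (fun k => Ct * (if Nat.leb z (n + k) then rho ^ (n + k - z) else 0))).
  2: { intros k _; unfold tail_weight; fold z.
       destruct (Nat.leb_spec 1 l'), (Nat.leb_spec 1 m'); try lia.
       destruct (Nat.leb_spec z (n + k)); simpl; unfold Ct, s, L, h, rho; ring. }
  rewrite rsum_scal_l; eapply Rle_trans;
    [apply Rmult_le_compat_l; [exact HCt | apply rsum_geom_shift; split; lra]|].
  rewrite R4.
  pose proof (gap_absorbs_constants l' m') as Hgap; fold s L h in Hgap.
  replace ((1/2) ^ l' * (1/2) ^ m') with (/ (2 ^ l' * 2 ^ m'))
    by (rewrite Rinv_mult, <- !pow_inv; f_equal; f_equal; lra).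
  pose proof (pow_lt 2 l' ltac:(lra)); pose proof (pow_lt 2 m' ltac:(lra)); pose proof (Hpos h).
  apply (Rmult_le_reg_r (2 ^ l' * 2 ^ m' * r ^ h)); [apply Rmult_lt_0_compat; nra|].
  unfold Ct; field_simplify; [|lra..].
  replace (r ^ (s * s) * 2 ^ L * INR K * INR m' * 2 ^ l' * 2 ^ m')
    with (r ^ (s * s) * (2 ^ L * 2 ^ l' * 2 ^ m' * (INR m' * INR K))) by ring.
  exact Hgap.
Qed.

Lemma block_tail_sum l m n Q : (1 <= l)%nat -> (1 <= m)%nat -> block_start l m n ->
  rsum (fun k => if Nat.leb (lev_len l) k then r ^ n * Cmod (xseq (n + k)) ^ m else 0) Q
  <= 4 * (r ^ (m * m) * / r ^ gap K0 K l m).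
Proof.
  intros Hl Hm HG; pose proof params_lam_gt1 as Hr.
  set (W := r ^ (m * m) * / r ^ gap K0 K l m).
  assert (HW : 0 < W) by (apply Rmult_lt_0_compat; [|apply Rinv_0_lt_compat]; apply pow_lt; lra).
  set (G k l' m' := tail_weight n l' m' (n + k)).
  assert (HG0 : forall k l' m', 0 <= G k l' m') by (intros; apply tail_weight_ge0).
  assert (Hsum0 : forall k, 0 <= rsum (fun l' => rsum (fun m' => G k l' m') (n + Q)) (n + Q))
    by (intros; apply rsum_ge0; intros; apply rsum_ge0; auto).
  apply (Rle_trans _ (rsum (fun k => W * rsum (fun l' => rsum (fun m' => G k l' m') (n + Q)) (n + Q)) Q)).
  - apply rsum_le; intros k Hk; destruct (Nat.leb_spec (lev_len l) k) as [Hlk|];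
      [|apply Rmult_le_pos; [lra | apply Hsum0]].
    destruct (classic (exists t, in_block t (n + k))) as [[[[[l' m'] n'] k'] Ht]|Hn].
    + eapply Rle_trans; [exact (xseq_tail_coord l m n k l' m' n' k' Hl Hm HG Hlk Ht)|].
      apply Rmult_le_compat_l; [lra|].
      pose proof Ht as (Hl' & Hm' & [_ HN] & _ & Hq).
      eapply Rle_trans; [|apply (rsum_ge_term (fun l'' => rsum (fun m'' => G k l'' m'') (n + Q)) l');
                          [intros; apply rsum_ge0; auto | lia]].
      apply (rsum_ge_term (fun m'' => G k l' m'') m'); [auto | lia].
    + rewrite xseq_out, Cmod_0, pow_i, Rmult_0_r by (assumption || lia).
      apply Rmult_le_pos; [lra | apply Hsum0].
  - rewrite rsum_scal_l, Rmult_comm; apply Rmult_le_compat_r; [lra|].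
    rewrite rsum_swap, (rsum_ext _ (fun l' => rsum (fun m' => rsum (fun k => G k l' m') Q) (n + Q)))
      by (intros; apply rsum_swap).
    eapply Rle_trans; [|apply (rsum2_half (n + Q) (n + Q))].
    apply rsum_le; intros l' _; apply rsum_le; intros m' _; apply tail_weight_sum.
Qed.

Lemma xseq_block_small l m n k eta : in_block (l, m, n, k) (n + k) -> 0 < eta ->
  r ^ lev_trunc l <= eta ^ m * r ^ n -> Cmod (xseq (n + k)) <= eta.
Proof.
  intros Hb Heta Hn; pose proof (xseq_block_le l m n k Hb) as Hx.
  pose proof Hb as (_ & Hm & _); pose proof (pow_lt r n ltac:(pose proof params_lam_gt1; lra)).
  apply (pow_le_reg _ _ m); [lia | lra|]; apply (Rmult_le_reg_l (r ^ n)); lra.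
Qed.

Variable A : (nat -> Prop) -> Prop.
Hypotheses (A_furstenberg : furstenberg A) (A_fin_inv : finitely_invariant A).
Hypothesis F_in_A : forall l m, (1 <= l)%nat -> (1 <= m)%nat -> A (F l m).

Lemma A_inhabited S : A S -> exists n, S n.
Proof.
  destruct A_furstenberg as (_ & H0 & Hup); intros HS; apply NNPP; intros Hn.
  apply H0, (Hup S); [exact HS|]; intros n Hs; apply Hn; eauto.
Qed.

Lemma block_starts_in_A l m : (1 <= l)%nat -> (1 <= m)%nat -> A (block_start l m).
Proof.
  intros Hl Hm; apply (A_fin_inv (F (gap K0 K l m) m)); apply F_in_A; [|exact Hm].
  pose proof (gap_ge K0 K l m); lia.
Qed.

Lemma xseq_summable : ex_series (fun q => Cmod (xseq q)).
Proof.
  pose proof params_lam_gt1 as Hr.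
  destruct (A_inhabited _ (block_starts_in_A 1 1 (le_n 1) (le_n 1))) as [n0 Hn0].
  set (L := lev_len 1); set (B := 4 * (r ^ (1 * 1) * / r ^ gap K0 K 1 1)).
  pose proof (pow_lt r n0 ltac:(lra)) as Hrn.
  assert (Hinv : 0 < / r ^ n0) by (apply Rinv_0_lt_compat, Hrn).
  refine (proj1 (ex_series_bounded _ (fun q => Cmod_ge_0 _) (INR n0 + INR L + / r ^ n0 * B) _)).
  intros Q; eapply Rle_trans; [apply (rsum_le_len _ Q (n0 + Q)); [intros; apply Cmod_ge_0 | lia]|].
  rewrite rsum_split.
  assert (Hhead : rsum (fun q => Cmod (xseq q)) n0 <= INR n0)
    by (rewrite <- (Rmult_1_r (INR n0)), <- rsum_const; apply rsum_le; intros; apply Cmod_xseq_le1).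
  assert (Hrest : rsum (fun k => Cmod (xseq (n0 + k))) Q
    <= rsum (fun k => (if Nat.ltb k L then 1 else 0)
                      + / r ^ n0 * (if Nat.leb L k then r ^ n0 * Cmod (xseq (n0 + k)) ^ 1 else 0)) Q).
  { apply rsum_le; intros k _; destruct (Nat.ltb_spec k L), (Nat.leb_spec L k); try lia; cbn beta iota.
    - pose proof (Cmod_xseq_le1 (n0 + k)); lra.
    - rewrite pow_1; field_simplify; lra. }
  rewrite rsum_plus, rsum_indicator, rsum_scal_l in Hrest.
  pose proof (block_tail_sum 1 1 n0 Q (le_n 1) (le_n 1) Hn0) as Htail; fold L B in Htail.
  assert (INR (Nat.min Q L) <= INR L) by (apply le_INR; lia).
  assert (/ r ^ n0 * rsum (fun k => if Nat.leb L k then r ^ n0 * Cmod (xseq (n0 + k)) ^ 1 else 0) Q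
          <= / r ^ n0 * B) by (apply Rmult_le_compat_l; lra).
  lra.
Qed.

Lemma xseq_neq0 : xseq <> czero.
Proof.
  pose proof params_lam_gt1 as Hr.
  destruct (dense_seq_approx_finite r (fun _ => RtoC 1) (RtoC 1) 1 (1/2) 1 Hr
              ltac:(intros E; apply RtoC_inj in E; lra) ltac:(lra)) as (l & Hl & Happrox & _).
  specialize (Happrox 0%nat (le_n 1)).
  assert (Hne : dense_seq r l 0 <> RtoC 0).
  { intros E; rewrite E, Cmult_0_r in Happrox.
    replace (Cminus (RtoC 0) (RtoC 1)) with (RtoC (-1)) in Happrox
      by (unfold Cminus, RtoC, Copp, Cplus; simpl; f_equal; ring).
    rewrite Cmod_R, Rabs_left in Happrox; lra. }
  assert (Hlen : (0 < lev_len l)%nat)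
    by (destruct (Nat.lt_ge_cases 0 (lev_len l)) as [|H]; [assumption | exfalso; exact (Hne (dense_seq_out r l 0 H))]).
  destruct (A_inhabited _ (block_starts_in_A l 1 Hl (le_n 1))) as [n Hn].
  assert (Hb : in_block (l, 1%nat, n, 0%nat) (n + 0)) by exact (conj Hl (conj (le_n 1) (conj Hn (conj Hlen eq_refl)))).
  pose proof (xseq_block_pow l 1 n 0 Hb) as E; intros Hx; rewrite Hx in E.
  apply Hne; rewrite <- E; unfold czero; simpl; ring.
Qed.


Lemma gap_tail_small l m c e M : 0 < e -> 0 <= c -> 8 * c * r ^ (m * m) / e <= r ^ M ->
  (M <= gap K0 K l m)%nat -> c * (4 * (r ^ (m * m) * / r ^ gap K0 K l m)) <= e / 2.
Proof.
  intros He Hc HM HMg; pose proof params_lam_gt1 as Hr.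
  pose proof (pow_lt r (gap K0 K l m) ltac:(lra)); pose proof (pow_lt r (m * m) ltac:(lra)).
  assert (r ^ M <= r ^ gap K0 K l m) by (apply Rle_pow; [lra | exact HMg]).
  apply (Rmult_le_reg_r (r ^ gap K0 K l m)); [lra|].
  replace (c * (4 * (r ^ (m * m) * / r ^ gap K0 K l m)) * r ^ gap K0 K l m)
    with (4 * c * r ^ (m * m)) by (field; lra).
  unfold Rdiv in HM; apply (Rmult_le_compat_r e) in HM; [|lra].
  rewrite Rmult_assoc, Rinv_l, Rmult_1_r in HM by lra; nra.
Qed.

Section Polynomial.

Variables (P : C -> C) (m : nat) (a : C) (Kp : R).
Hypotheses (m_ge1 : (1 <= m)%nat) (Kp_ge0 : 0 <= Kp).
Hypothesis P_lowest : forall z, Cmod z <= 1 ->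
  Cmod (Cminus (P z) (Cmult a (Cpow z m))) <= Kp * Cmod z ^ S m /\
  Cmod (P z) <= (Cmod a + Kp) * Cmod z ^ m.

Lemma orbit_coord_error l n k eta : (1 <= l)%nat -> block_start l m n -> 0 < eta ->
  (forall k, (k < lev_len l)%nat -> Cmod (xseq (n + k)) <= eta) ->
  Cmod (Cminus (Cmult (Cpow lam n) (P (xseq (n + k)))) (Cmult a (dense_seq r l k)))
  <= (if Nat.ltb k (lev_len l) then Kp * r ^ lev_trunc l * eta else 0)
     + (Cmod a + Kp) * (if Nat.leb (lev_len l) k then r ^ n * Cmod (xseq (n + k)) ^ m else 0).
Proof.
  intros Hl HG Heta Hsmall; pose proof params_lam_gt1 as Hr.
  pose proof (Cmod_xseq_le1 (n + k)) as Hx1; pose proof (pow_lt r n ltac:(lra)).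
  pose proof (Cmod_ge_0 a); set (x := xseq (n + k)) in *.
  destruct (P_lowest x Hx1) as [Hlow Hbound].
  destruct (Nat.ltb_spec k (lev_len l)) as [Hk|Hk], (Nat.leb_spec (lev_len l) k); try lia; cbn beta iota.
  - assert (Hb : in_block (l, m, n, k) (n + k)) by exact (conj Hl (conj m_ge1 (conj HG (conj Hk eq_refl)))).
    rewrite <- (xseq_block_pow l m n k Hb); fold x.
    replace (Cminus (Cmult (Cpow lam n) (P x)) (Cmult a (Cmult (Cpow lam n) (Cpow x m))))
      with (Cmult (Cpow lam n) (Cminus (P x) (Cmult a (Cpow x m)))) by ring.
    rewrite Cmod_mult, Cmod_pow; pose proof (xseq_block_le l m n k Hb) as Hxm; fold x in Hxm.
    pose proof (Hsmall k ltac:(assumption)) as Hxe; fold x in Hxe.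
    pose proof (Cmod_ge_0 x); pose proof (pow_le (Cmod x) m ltac:(lra)).
    apply (Rle_trans _ (Kp * (r ^ n * Cmod x ^ m) * Cmod x)).
    + simpl; replace (Kp * (r ^ n * Cmod x ^ m) * Cmod x) with (r ^ n * (Kp * (Cmod x * Cmod x ^ m))) by ring.
      apply Rmult_le_compat_l; [lra | exact Hlow].
    + assert (0 <= r ^ n * Cmod x ^ m) by nra.
      assert (Kp * (r ^ n * Cmod x ^ m) <= Kp * r ^ lev_trunc l) by (apply Rmult_le_compat_l; lra).
      pose proof (pow_le r (lev_trunc l) ltac:(lra)).
      apply (Rle_trans _ (Kp * r ^ lev_trunc l * eta)); [apply Rmult_le_compat; nra | lra].
  - rewrite dense_seq_out, Cmult_0_r by assumption.
    replace (Cminus (Cmult (Cpow lam n) (P x)) (RtoC 0)) with (Cmult (Cpow lam n) (P x)) by ring.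
    rewrite Cmod_mult, Cmod_pow; nra.
Qed.

Lemma orbit_block_error l n eta eps : (1 <= l)%nat -> block_start l m n -> 0 < eta ->
  (forall k, (k < lev_len l)%nat -> Cmod (xseq (n + k)) <= eta) ->
  INR (lev_len l) * (Kp * r ^ lev_trunc l * eta) <= eps / 2 ->
  (Cmod a + Kp) * (4 * (r ^ (m * m) * / r ^ gap K0 K l m)) <= eps / 2 ->
  ex_series (fun k => Cmod (Cminus (Cmult (Cpow lam n) (P (xseq (n + k)))) (Cmult a (dense_seq r l k))))
  /\ Series (fun k => Cmod (Cminus (Cmult (Cpow lam n) (P (xseq (n + k)))) (Cmult a (dense_seq r l k))))
     <= eps.
Proof.
  intros Hl HG Heta Hsmall Hhead Htail; pose proof params_lam_gt1 as Hr.
  apply ex_series_bounded; [intros; apply Cmod_ge_0|]; intros Q.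
  eapply Rle_trans; [apply rsum_le; intros k _; exact (orbit_coord_error l n k eta Hl HG Heta Hsmall)|].
  rewrite rsum_plus, rsum_indicator, rsum_scal_l.
  pose proof (block_tail_sum l m n Q Hl m_ge1 HG) as Htail_sum.
  assert (INR (Nat.min Q (lev_len l)) <= INR (lev_len l)) by (apply le_INR; lia).
  assert (0 <= Kp * r ^ lev_trunc l * eta)
    by (apply Rmult_le_pos; [apply Rmult_le_pos; [lra | apply pow_le; lra] | lra]).
  pose proof (Cmod_ge_0 a).
  assert ((Cmod a + Kp) * rsum (fun k => if Nat.leb (lev_len l) k then r ^ n * Cmod (xseq (n + k)) ^ m else 0) Q
          <= (Cmod a + Kp) * (4 * (r ^ (m * m) * / r ^ gap K0 K l m)))
    by (apply Rmult_le_compat_l; lra).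
  nra.
Qed.

Definition head_tol (l : nat) (e : R) : R :=
  e / (2 * (INR (lev_len l) + 1) * (Kp + 1) * r ^ lev_trunc l).

Lemma head_tol_gt0 l e : 0 < e -> 0 < head_tol l e.
Proof.
  intros He; pose proof (pos_INR (lev_len l)); pose proof (pow_lt r (lev_trunc l) ltac:(pose proof params_lam_gt1; lra)).
  apply Rdiv_lt_0_compat; [lra | repeat apply Rmult_lt_0_compat; lra].
Qed.

Lemma head_tol_spec l e : 0 < e -> INR (lev_len l) * (Kp * r ^ lev_trunc l * head_tol l e) <= e / 2.
Proof.
  intros He; pose proof (pos_INR (lev_len l)); pose proof (pow_lt r (lev_trunc l) ltac:(pose proof params_lam_gt1; lra)).
  unfold head_tol; set (L := INR (lev_len l)) in *; set (s := r ^ lev_trunc l) in *.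
  replace (L * (Kp * s * (e / (2 * (L + 1) * (Kp + 1) * s)))) with (L / (L + 1) * (Kp / (Kp + 1)) * (e / 2))
    by (field; repeat split; lra).
  assert (Hfrac : forall c, 0 <= c -> 0 <= c / (c + 1) <= 1).
  { intros c Hc; split; [apply Rdiv_le_0_compat; lra|].
    apply (Rmult_le_reg_r (c + 1)); [lra|]; unfold Rdiv; rewrite Rmult_assoc, Rinv_l; lra. }
  pose proof (Hfrac L ltac:(lra)); pose proof (Hfrac Kp Kp_ge0).
  assert (L / (L + 1) * (Kp / (Kp + 1)) <= 1) by nra; nra.
Qed.


Lemma orbit_in_X X n : valid_space X -> inX X (Nat.iter n (lamB lam) (fun q => P (xseq q))).
Proof.
  intros HX; pose proof params_lam_gt1 as Hr; pose proof (Cmod_ge_0 a).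
  pose proof (pow_lt r n ltac:(lra)).
  apply (inX_dominated X _ (fun k => Cmod (xseq (n + k))) (r ^ n * (Cmod a + Kp)) HX).
  - apply Rmult_le_pos; lra.
  - intros k; rewrite iter_lamB, Cmod_mult, Cmod_pow, Rmult_assoc; apply Rmult_le_compat_l; [lra|].
    destruct (P_lowest (xseq (n + k)) (Cmod_xseq_le1 _)) as [_ HPk]; eapply Rle_trans; [exact HPk|].
    apply Rmult_le_compat_l; [lra|]; rewrite <- (pow_1 (Cmod (xseq (n + k)))) at 2.
    apply pow_le_decr; [split; [apply Cmod_ge_0 | apply Cmod_xseq_le1] | lia].
  - intros k; split; [apply Cmod_ge_0 | apply Cmod_xseq_le1].
  - apply (ex_series_incr_n (fun q => Cmod (xseq q)) n), xseq_summable.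
Qed.

(* Near a block start [n] of [(l, m)] the orbit of [P(x)] is [a * dense_seq r l]
   up to an l^1-small error: on the block [P(x) ~ a x^m], after it the tail is small. *)
Lemma orbit_near_target X u0 e l n : valid_space X -> 0 < e -> (1 <= l)%nat -> block_start l m n ->
  inX X u0 -> smallX X (fun k => Cminus (Cmult a (dense_seq r l k)) (u0 k)) (small_radius X e) ->
  (Cmod a + Kp) * (4 * (r ^ (m * m) * / r ^ gap K0 K l m)) <= Rmin (small_radius X e) 1 / 2 ->
  r ^ lev_trunc l / head_tol l (Rmin (small_radius X e) 1) ^ m <= r ^ n ->
  normX X (csub (Nat.iter n (lamB lam) (fun q => P (xseq q))) u0) < e.
Proof.
  intros HX He Hl HG Hu0 Happrox Htail HN; pose proof params_lam_gt1 as Hr.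
  set (e1 := Rmin (small_radius X e) 1) in *.
  pose proof (small_radius_gt0 X e HX He).
  assert (He1 : 0 < e1) by (apply Rmin_pos; lra).
  set (eta := head_tol l e1) in *; pose proof (head_tol_gt0 l e1 He1) as Heta; fold eta in Heta.
  assert (Hsmall : forall k, (k < lev_len l)%nat -> Cmod (xseq (n + k)) <= eta).
  { intros k Hk; apply (xseq_block_small l m n k eta (conj Hl (conj m_ge1 (conj HG (conj Hk eq_refl)))) Heta).
    pose proof (pow_lt eta m Heta).
    apply (Rmult_le_reg_r (/ eta ^ m)); [apply Rinv_0_lt_compat; lra|].
    replace (eta ^ m * r ^ n * / eta ^ m) with (r ^ n) by (field; lra); exact HN. }
  destruct (orbit_block_error l n eta e1 Hl HG Heta Hsmall (head_tol_spec l e1 He1) Htail) as [Hex Herr].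
  apply (normX_lt_small_plus_l1 X (fun k => Cminus (Cmult a (dense_seq r l k)) (u0 k))
           (fun k => Cminus (Cmult (Cpow lam n) (P (xseq (n + k)))) (Cmult a (dense_seq r l k)))
           _ e HX He); auto.
  - intros k; unfold csub; rewrite iter_lamB; ring.
  - apply inX_csub, Hu0; [exact HX | apply orbit_in_X, HX].
Qed.

End Polynomial.

Lemma poly_algebra_xseq_hypercyclic X y : valid_space X -> poly_algebra xseq y -> y <> czero ->
  A_hypercyclic X A (lamB lam) y.
Proof.
  intros HX Hy Hy0; pose proof params_lam_gt1 as Hr.
  destruct (poly_algebra_lowest_term xseq y Hy Hy0) as (P & m & a & Kp & -> & Hm & Ha & HKp & HP).
  intros U [HUX HUo] [u0 Hu0]; destruct (HUo u0 Hu0) as (e & He & Hball).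
  pose proof (small_radius_gt0 X e HX He) as Hd.
  set (e1 := Rmin (small_radius X e) 1); assert (He1 : 0 < e1) by (apply Rmin_pos; lra).
  destruct (pow_unbounded r (8 * (Cmod a + Kp) * r ^ (m * m) / e1) 1 Hr) as (M & HM1 & HM).
  destruct (dense_seq_approx X r u0 a (small_radius X e) M HX Hr (HUX u0 Hu0) Ha Hd) as (l & HlM & Happrox).
  destruct (pow_unbounded r (r ^ lev_trunc l / head_tol Kp l e1 ^ m) 0 Hr) as (N0 & _ & HN0).
  apply (proj2 (proj2 A_furstenberg) (fun n => block_start l m n /\ (N0 < n)%nat));
    [apply A_fin_inv, block_starts_in_A; lia|].
  intros n [HG HnN0]; apply Hball; [exact (orbit_in_X P m a Kp Hm HKp HP X n HX)|].
  apply (orbit_near_target P m a Kp Hm HKp HP X u0 e l n HX He ltac:(lia) HG (HUX u0 Hu0) Happrox).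
  - apply (gap_tail_small l m (Cmod a + Kp) e1 M He1 ltac:(pose proof (Cmod_ge_0 a); lra) HM).
    pose proof (gap_ge K0 K l m); lia.
  - eapply Rle_trans; [exact HN0 | apply Rle_pow; lra || lia].
Qed.

End Construction.

Lemma hypercyclic_algebra_of_separated_family X A lam : valid_space X -> furstenberg A ->
  finitely_invariant A -> 1 < Cmod lam ->
  (exists F, (forall l m, (1 <= l)%nat -> (1 <= m)%nat -> A (F l m)) /\ separated_family F) ->
  exists B, hypercyclic_algebra X A (lamB lam) B.
Proof.
  intros HX HA HAi Hr (F & HFA & HF).
  destruct (construction_params_exist lam F HF Hr) as (K0 & K & Hparams).
  exists (poly_algebra (xseq lam F K0 K)); split; [|split].
  - apply poly_algebra_subalgebra; [exact HX | apply Cmod_xseq_le1, Hparams |].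
    exact (xseq_summable lam F K0 K Hparams A HA HAi HFA).
  - exists (xseq lam F K0 K); split; [apply poly_algebra_gen|].
    exact (xseq_neq0 lam F K0 K Hparams A HA HAi HFA).
  - intros y Hy Hy0; exact (poly_algebra_xseq_hypercyclic lam F K0 K Hparams A HA HAi HFA X y HX Hy Hy0).
Qed.

Theorem theorem2p4 (X : seqspace) (A : (nat -> Prop) -> Prop) (lam : C) :
  valid_space X -> furstenberg A -> finitely_invariant A -> 1 < Cmod lam ->
  ((exists B : cseq -> Prop,
      subalgebra X B /\ (exists x, B x /\ x <> czero) /\
      (forall x, B x -> x <> czero -> A_hypercyclic X A (lamB lam) x))
   <->
   (exists F : nat -> nat -> (nat -> Prop),
      (forall l m, (1 <= l)%nat -> (1 <= m)%nat -> A (F l m)) /\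
      (forall l m l' m', (1 <= l)%nat -> (1 <= m)%nat -> (1 <= l')%nat ->
         (1 <= m')%nat -> (l, m) <> (l', m') ->
         forall n, ~ (F l m n /\ F l' m' n)) /\
      (forall l m l' m' n n', (1 <= l)%nat -> (1 <= m)%nat -> (1 <= l')%nat ->
         (1 <= m')%nat -> F l m n -> F l' m' n' -> (n' > n)%nat ->
         (n' >= n + l)%nat /\
         INR n' * INR m / INR m' >= INR (n + l + l')))).
Proof.
  intros HX HA HAi Hr; split.
  - exact (separated_family_of_hypercyclic_algebra X A lam HX Hr).
  - exact (hypercyclic_algebra_of_separated_family X A lam HX HA HAi Hr).
Qed.
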